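(* Let $T$ be an orthogonal term rewriting system and $t,s,u$ terms such that there is a convergent reduction sequence from $t$ with target $u$, $u$ is a normal form, and there is a finite reduction sequence from $t$ to $s$ all of whose steps have depth $0$. Then there is a convergent reduction sequence from $s$ with target $u$.
   Context: $T=(\Sigma,R)$, $\Sigma$ finite, rules $l\to r$ with $l$ finite non-variable, variables of $r$ in $l$, terms finite or infinite. $T$ is orthogonal iff it is left-linear (no variable occurs twice in a left-hand side) and non-overlapping: there is no term $t=\sigma_1 l_1$ with $t|_p=\sigma_2 l_2$ for left-hand sides $l_1,l_2$ of rules and $p$ a non-variable position of $l_1$, other than the trivial case $p$ empty and $l_1,l_2$ being the same rule. A normal form is a term containing no subterm of the form $\sigma l$ for a rule $l\to r$. Distance $d(t,u)=0$ if $t=u$, else $2^{-k}$ with $k$ the least depth at which they differ. A reduction step $\langle t,p,\mu,\sigma\rangle$ has $t|_p=\sigma l$, target $t[\sigma r]_p$, depth $|p|$. A reduction sequence is $id_t$ or $\langle a_\alpha\rangle_{\alpha<\beta}$ with $src(a_{\alpha+1})=tgt(a_\alpha)$, and at each limit $\beta_0<\beta$: $\lim_{\alpha\to\beta_0}tgt(a_\alpha)$ exists and equals $src(a_{\beta_0})$, and depths of $a_\alpha$ tend to infinity as $\alpha\to\beta_0$. It is convergent iff it is empty, of successor length, or of limit length $\beta$ with the limit existing and depths tending to infinity also at $\beta$; its target is then the target of its last step, or that limit. *)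

From Stdlib Require Import List Arith.
Import ListNotations.
Set Implicit Arguments.

Record signature := {
  sym : Type;
  arity : sym -> nat;
  sym_finite : exists l : list sym, forall f, In f l }.

Definition var := nat.
Definition label (S : signature) := (sym S + var)%type.
Definition pos := list nat.

(* A (finite or infinite) term is a labelling of positions; [None] means
   "not a position of the term".  [wf] says it is a genuine tree. *)
Definition term (S : signature) := pos -> option (label S).

Definition wf (S : signature) (t : term S) : Prop :=
  t [] <> None /\
  forall (p : pos) (i : nat),
    t (p ++ [i]) <> None <-> exists f, t p = Some (inl f) /\ i < arity S f.

Definition finite_term (S : signature) (t : term S) : Prop :=
  exists n, forall p : pos, n < length p -> t p = None.

Definition subterm (S : signature) (t : term S) (p : pos) : term S :=
  fun q => t (p ++ q).

Fixpoint strip (p q : pos) : option pos :=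
  match p, q with
  | [], _ => Some q
  | i :: p', j :: q' => if Nat.eqb i j then strip p' q' else None
  | _ :: _, [] => None
  end.

Definition replace (S : signature) (t : term S) (p : pos) (s : term S) : term S :=
  fun q => match strip p q with Some r => s r | None => t q end.

Fixpoint subst_aux (S : signature) (l : term S) (sigma : var -> term S)
  (acc : pos) (p : pos) : option (label S) :=
  match l acc with
  | Some (inr x) => sigma x p
  | _ => match p with
         | [] => l acc
         | i :: p' => subst_aux l sigma (acc ++ [i]) p'
         end
  end.

Definition subst (S : signature) (l : term S) (sigma : var -> term S) : term S :=
  fun p => subst_aux l sigma [] p.

Definition wf_subst (S : signature) (sigma : var -> term S) : Prop :=
  forall x, wf (sigma x).

Record rule (S : signature) := { lhs : term S; rhs : term S }.

Definition is_rule (S : signature) (rho : rule S) : Prop :=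
  wf (lhs rho) /\ wf (rhs rho) /\
  finite_term (lhs rho) /\
  (exists f, lhs rho [] = Some (inl f)) /\
  (forall p x, rhs rho p = Some (inr x) -> exists q, lhs rho q = Some (inr x)).

Record TRS (S : signature) := {
  rules : rule S -> Prop;
  rules_ok : forall rho, rules rho -> is_rule rho }.

Definition left_linear (S : signature) (T : TRS S) : Prop :=
  forall rho, rules T rho ->
  forall p q x, lhs rho p = Some (inr x) -> lhs rho q = Some (inr x) -> p = q.

Definition non_overlapping (S : signature) (T : TRS S) : Prop :=
  ~ exists (rho1 rho2 : rule S) (sigma1 sigma2 : var -> term S) (p : pos),
      rules T rho1 /\ rules T rho2 /\ wf_subst sigma1 /\ wf_subst sigma2 /\
      (exists f, lhs rho1 p = Some (inl f)) /\
      subterm (subst (lhs rho1) sigma1) p = subst (lhs rho2) sigma2 /\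
      ~ (p = [] /\ rho1 = rho2).

Definition orthogonal (S : signature) (T : TRS S) : Prop :=
  left_linear T /\ non_overlapping T.

Definition normal_form (S : signature) (T : TRS S) (t : term S) : Prop :=
  ~ exists (p : pos) (rho : rule S) (sigma : var -> term S),
      rules T rho /\ wf_subst sigma /\ subterm t p = subst (lhs rho) sigma.

Record step (S : signature) := {
  st_src : term S; st_pos : pos; st_rule : rule S; st_sub : var -> term S }.

Definition valid_step (S : signature) (T : TRS S) (a : step S) : Prop :=
  wf (st_src a) /\ rules T (st_rule a) /\ wf_subst (st_sub a) /\
  subterm (st_src a) (st_pos a) = subst (lhs (st_rule a)) (st_sub a).

Definition st_tgt (S : signature) (a : step S) : term S :=
  replace (st_src a) (st_pos a) (subst (rhs (st_rule a)) (st_sub a)).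

Definition st_depth (S : signature) (a : step S) : nat := length (st_pos a).

(* t and u agree up to depth k, i.e. d(t,u) < 2^-k *)
Definition agree (S : signature) (k : nat) (t u : term S) : Prop :=
  forall p : pos, length p <= k -> t p = u p.

(* Ordinals are represented by well-ordered index types. *)
Record well_order (A : Type) (lt : A -> A -> Prop) : Prop := {
  wo_trans : forall a b c, lt a b -> lt b c -> lt a c;
  wo_irrefl : forall a, ~ lt a a;
  wo_total : forall a b, lt a b \/ a = b \/ lt b a;
  wo_wf : well_founded lt }.

Definition is_min (A : Type) (lt : A -> A -> Prop) (a : A) : Prop :=
  forall b, ~ lt b a.
Definition is_succ (A : Type) (lt : A -> A -> Prop) (a b : A) : Prop :=
  lt a b /\ forall c, ~ (lt a c /\ lt c b).
Definition is_limit (A : Type) (lt : A -> A -> Prop) (b : A) : Prop :=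
  (exists a, lt a b) /\ ~ (exists a, is_succ lt a b).

(* limit along the indices in D (a down-closed set with no maximum):
   f alpha --> v as alpha runs through D *)
Definition conv_on (S : signature) (A : Type) (lt : A -> A -> Prop)
  (D : A -> Prop) (f : A -> term S) (v : term S) : Prop :=
  forall k, exists a, D a /\ forall c, D c -> (a = c \/ lt a c) -> agree k (f c) v.

Definition depth_inf_on (A : Type) (lt : A -> A -> Prop)
  (D : A -> Prop) (d : A -> nat) : Prop :=
  forall n, exists a, D a /\ forall c, D c -> (a = c \/ lt a c) -> n < d c.

(* A reduction sequence: a source term and steps indexed by a well order
   (the empty index type gives id_t). *)
Record rseq (S : signature) := {
  rs_src : term S;
  rs_idx : Type;
  rs_lt : rs_idx -> rs_idx -> Prop;
  rs_step : rs_idx -> step S }.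

Definition is_rseq (S : signature) (T : TRS S) (q : rseq S) : Prop :=
  wf (rs_src q) /\
  well_order (rs_lt q) /\
  (forall a, valid_step T (rs_step q a)) /\
  (forall a, is_min (rs_lt q) a -> st_src (rs_step q a) = rs_src q) /\
  (forall a b, is_succ (rs_lt q) a b -> st_src (rs_step q b) = st_tgt (rs_step q a)) /\
  (forall b, is_limit (rs_lt q) b ->
     conv_on (rs_lt q) (fun c => rs_lt q c b) (fun c => st_tgt (rs_step q c))
             (st_src (rs_step q b)) /\
     depth_inf_on (rs_lt q) (fun c => rs_lt q c b) (fun c => st_depth (rs_step q c))).

Definition conv_target (S : signature) (q : rseq S) (u : term S) : Prop :=
  (~ inhabited (rs_idx q) /\ u = rs_src q) \/
  (exists m, (forall a, a = m \/ rs_lt q a m) /\ u = st_tgt (rs_step q m)) \/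
  (inhabited (rs_idx q) /\ (forall m, exists a, rs_lt q m a) /\
   wf u /\
   conv_on (rs_lt q) (fun _ => True) (fun c => st_tgt (rs_step q c)) u /\
   depth_inf_on (rs_lt q) (fun _ => True) (fun c => st_depth (rs_step q c))).

Definition finite_rseq (S : signature) (q : rseq S) : Prop :=
  exists l : list (rs_idx q), forall a, In a l.

(** By induction along the finite sequence of root steps it
    suffices to treat a single root step [t = l σ -> r σ].  Since [u] is a
    normal form, the reduction from [t] to [u] must contain a root step; let
    [m] be the first one.  By orthogonality every earlier step lies strictly
    below a variable position of [l], so [l] stays a pattern of the terms up to
    [m], and step [m] contracts the same redex with the same rule.  Each earlier
    step, happening inside the argument of a variable [x] of [l], is replayed at
    every occurrence of [x] in [r]; ordering these copies by step index and then
    by a numerical code of the occurrence gives a convergent reduction from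
    [r σ] to the target of step [m], and the rest of the given reduction leads
    on to [u].  At limits the copies are eventually deep because the original
    steps are, and because (the arities being bounded) only finitely many
    occurrences in [r] have a code below any given bound at bounded depth. *)

From Stdlib Require Import List Arith Lia Classical ClassicalEpsilon
  FunctionalExtensionality Wellfounded Cantor.
Import ListNotations.

(** * Positions and terms *)

Lemma strip_app (p r : pos) : strip p (p ++ r) = Some r.
Proof. induction p; simpl; auto. rewrite Nat.eqb_refl. auto. Qed.

Lemma strip_some (p q r : pos) : strip p q = Some r -> q = p ++ r.
Proof.
  revert q. induction p; intros q H; simpl in *.
  - congruence.
  - destruct q; try discriminate. destruct (Nat.eqb a n) eqn:E; try discriminate.
    apply Nat.eqb_eq in E. subst. f_equal. auto.
Qed.

Lemma strip_cases (p q : pos) :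
  (exists r, q = p ++ r) \/ (strip p q = None /\ forall r, q <> p ++ r).
Proof.
  destruct (strip p q) eqn:E.
  - left. exists p0. apply strip_some; auto.
  - right. split; auto. intros r ->. rewrite strip_app in E. discriminate.
Qed.

Lemma prefix_comparable (a b c d : pos) : a ++ c = b ++ d ->
  (exists e, b = a ++ e) \/ (exists e, a = b ++ e).
Proof.
  revert b. induction a; intros b H; simpl in *.
  - left. exists b. auto.
  - destruct b; simpl in *.
    + right. exists (a :: a0). auto.
    + injection H; intros H1 H2; subst. destruct (IHa _ H1) as [[e He]|[e He]].
      * left. exists e. subst. auto.
      * right. exists e. subst. auto.
Qed.

Lemma subterm_app {S} (t : term S) p q : subterm (subterm t p) q = subterm t (p ++ q).
Proof.
  unfold subterm. apply functional_extensionality. intro x. rewrite app_assoc. auto.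
Qed.

Lemma replace_nil {S} (t s : term S) : replace t [] s = s.
Proof. reflexivity. Qed.

Lemma replace_in {S} (t s : term S) p r : replace t p s (p ++ r) = s r.
Proof. unfold replace. rewrite strip_app. auto. Qed.

Lemma replace_out {S} (t s : term S) p q :
  (forall r, q <> p ++ r) -> replace t p s q = t q.
Proof.
  intro H. unfold replace. destruct (strip p q) eqn:E; auto.
  apply strip_some in E. exfalso. eapply H; eauto.
Qed.

Lemma subterm_replace_in {S} (t X : term S) p w :
  subterm (replace t (p ++ w) X) p = replace (subterm t p) w X.
Proof.
  apply functional_extensionality. intro q. unfold subterm.
  destruct (strip_cases w q) as [[r ->]|[_ H]].
  - rewrite app_assoc, !replace_in. auto.
  - rewrite !replace_out; auto. intros r E. apply (H r).
    rewrite <- app_assoc in E. apply app_inv_head in E. auto.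
Qed.

Lemma replace_below {S} (t X : term S) a w w' :
  replace t (a ++ w) X (a ++ w') = replace (subterm t a) w X w'.
Proof. rewrite <- subterm_replace_in. reflexivity. Qed.

Lemma subterm_replace_out {S} (t X : term S) p w :
  (forall e, p <> w ++ e) -> (forall e, w <> p ++ e) ->
  subterm (replace t p X) w = subterm t w.
Proof.
  intros H1 H2. apply functional_extensionality. intro q. unfold subterm.
  rewrite replace_out; auto. intros r E.
  destruct (prefix_comparable _ _ _ _ E) as [[e He]|[e He]].
  - exact (H1 e He).
  - exact (H2 e He).
Qed.

Lemma wf_prefix_fun {S} (t : term S) p q : wf t -> t (p ++ q) <> None -> q <> [] ->
  exists f, t p = Some (inl f).
Proof.
  intros Wt. induction q using rev_ind; intros H Hq.
  - congruence.
  - rewrite app_assoc in H. apply (proj2 Wt) in H. destruct H as [f [Hf _]].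
    destruct q.
    + rewrite app_nil_r in Hf. eauto.
    + apply IHq; [congruence|]. intro E; inversion E.
Qed.

Lemma wf_subterm {S} (t : term S) p : wf t -> t p <> None -> wf (subterm t p).
Proof.
  intros Wt H. split.
  - unfold subterm. rewrite app_nil_r. auto.
  - intros q i. unfold subterm. rewrite app_assoc. apply (proj2 Wt).
Qed.

Lemma wf_var_leaf {S} (t : term S) p q x :
  wf t -> t p = Some (inr x) -> q <> [] -> t (p ++ q) = None.
Proof.
  intros Wt H Hq. destruct (t (p ++ q)) eqn:E; auto.
  destruct (wf_prefix_fun t p q Wt) as [f Hf]; congruence.
Qed.

Lemma wf_var_pos_eq {S} (t : term S) o o' e e' x y : wf t ->
  t o = Some (inr x) -> t o' = Some (inr y) -> o ++ e = o' ++ e' -> o = o'.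
Proof.
  intros Wt Hx Hy E. destruct (prefix_comparable _ _ _ _ E) as [[f He]|[f He]];
    destruct f; rewrite ?app_nil_r in He; auto; subst; exfalso.
  - rewrite (wf_var_leaf t _ _ x Wt Hx) in Hy; [discriminate|discriminate].
  - rewrite (wf_var_leaf t _ _ y Wt Hy) in Hx; [discriminate|discriminate].
Qed.

Lemma agree_trans {S} k (a b c : term S) : agree k a b -> agree k b c -> agree k a c.
Proof. unfold agree. intros. rewrite H; auto. Qed.

Lemma agree_mono {S} k k' (a b : term S) : k' <= k -> agree k a b -> agree k' a b.
Proof. unfold agree. intros. apply H0. lia. Qed.

Lemma agree_subterm {S} k (a b : term S) p :
  agree (length p + k) a b -> agree k (subterm a p) (subterm b p).
Proof. unfold agree, subterm. intros. apply H. rewrite length_app. lia. Qed.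

Lemma agree_all {S} (a b : term S) : (forall k, agree k a b) -> a = b.
Proof. intros. apply functional_extensionality. intro p. apply (H (length p)). lia. Qed.

(** * Substitution depending on the variable position *)

(* [psubst l F] replaces the variable [x] at position [o] of [l] by [F o x];
   [subst] is the case where [F] ignores [o]. *)
Fixpoint psubst_aux {S} (l : term S) (F : pos -> var -> term S) (acc p : pos)
  : option (label S) :=
  match l acc with
  | Some (inr x) => F acc x p
  | _ => match p with [] => l acc | i :: p' => psubst_aux l F (acc ++ [i]) p' end
  end.

Definition psubst {S} (l : term S) F : term S := fun p => psubst_aux l F [] p.

Lemma subst_psubst {S} (l : term S) sigma : subst l sigma = psubst l (fun _ x => sigma x).
Proof.
  apply functional_extensionality. intro p. unfold subst, psubst.
  generalize (@nil nat) as acc. induction p; intro acc; simpl;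
    destruct (l acc) as [[f|x]|]; auto.
Qed.

Definition no_var_above {S} (l : term S) p :=
  forall o1 o2, p = o1 ++ o2 -> forall y, l o1 <> Some (inr y).

Lemma var_above_dec {S} (l : term S) p :
  (exists o w x, p = o ++ w /\ l o = Some (inr x)) \/ no_var_above l p.
Proof.
  destruct (classic (exists o w x, p = o ++ w /\ l o = Some (inr x))); auto.
  right. intros o1 o2 E y Hy. apply H. eauto.
Qed.

Lemma no_var_above_prefix {S} (l : term S) p q : no_var_above l (p ++ q) -> no_var_above l p.
Proof. intros H o1 o2 E. subst. apply (H o1 (o2 ++ q)). rewrite app_assoc. auto. Qed.

Lemma no_var_above_fun {S} (l : term S) q f : wf l -> l q = Some (inl f) -> no_var_above l q.
Proof.
  intros Wl H o1 o2 E y Hy. subst. destruct o2.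
  - rewrite app_nil_r in H. congruence.
  - destruct (wf_prefix_fun l o1 (n :: o2) Wl) as [g Hg]; [congruence|discriminate|congruence].
Qed.

Lemma psubst_aux_var {S} (l : term S) F acc o w x :
  l (acc ++ o) = Some (inr x) ->
  (forall o1 o2, o = o1 ++ o2 -> o2 <> [] -> forall y, l (acc ++ o1) <> Some (inr y)) ->
  psubst_aux l F acc (o ++ w) = F (acc ++ o) x w.
Proof.
  revert acc. induction o as [|a o IH]; intros acc H1 H2; simpl.
  - rewrite app_nil_r in *. destruct w; simpl; rewrite H1; auto.
  - destruct (l acc) as [[f|y]|] eqn:E.
    2: { exfalso. apply (H2 [] (a :: o)) with y; rewrite ?app_nil_r; auto. discriminate. }
    all: rewrite (IH (acc ++ [a])); rewrite <- ?app_assoc; auto;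
      intros o1 o2 Ho Hne y; rewrite <- app_assoc; apply (H2 (a :: o1) o2); subst; auto.
Qed.

Lemma psubst_var {S} (l : term S) F o w x : wf l -> l o = Some (inr x) ->
  psubst l F (o ++ w) = F o x w.
Proof.
  intros Wl H. apply (psubst_aux_var l F [] o w x); auto.
  intros o1 o2 -> Hne y Hy. simpl in Hy.
  destruct (wf_prefix_fun l o1 o2 Wl) as [f Hf]; congruence.
Qed.

Lemma psubst_aux_no_var {S} (l : term S) F acc p :
  (forall o1 o2, p = o1 ++ o2 -> forall y, l (acc ++ o1) <> Some (inr y)) ->
  psubst_aux l F acc p = l (acc ++ p).
Proof.
  revert acc. induction p as [|a p IH]; intros acc H; simpl.
  - rewrite app_nil_r. destruct (l acc) as [[f|y]|] eqn:E; auto.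
    exfalso. apply (H [] []) with y; rewrite ?app_nil_r; auto.
  - destruct (l acc) as [[f|y]|] eqn:E.
    2: { exfalso. apply (H [] (a :: p)) with y; rewrite ?app_nil_r; auto. }
    all: rewrite IH; rewrite <- ?app_assoc; auto;
      intros o1 o2 Ho y; rewrite <- app_assoc; apply (H (a :: o1) o2); subst; auto.
Qed.

Lemma psubst_no_var {S} (l : term S) F p : no_var_above l p -> psubst l F p = l p.
Proof. intro H. apply psubst_aux_no_var. simpl. auto. Qed.

Lemma subterm_psubst_var {S} (r : term S) F o x : wf r -> r o = Some (inr x) ->
  subterm (psubst r F) o = F o x.
Proof.
  intros Wr H. apply functional_extensionality. intro w. unfold subterm. apply psubst_var; auto.
Qed.

Lemma psubst_ext {S} (l : term S) F F' : wf l ->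
  (forall o x, l o = Some (inr x) -> F o x = F' o x) -> psubst l F = psubst l F'.
Proof.
  intros Wl H. apply functional_extensionality. intro p.
  destruct (var_above_dec l p) as [[o [w [x [-> Hx]]]]|Hn].
  - rewrite !(psubst_var l _ o w x Wl Hx), H; auto.
  - rewrite !psubst_no_var; auto.
Qed.

Lemma psubst_agree {S} (l : term S) F F' k : wf l ->
  (forall o x, l o = Some (inr x) -> length o <= k ->
     agree (k - length o) (F o x) (F' o x)) ->
  agree k (psubst l F) (psubst l F').
Proof.
  intros Wl H p Hp.
  destruct (var_above_dec l p) as [[o [w [x [-> Hx]]]]|Hn].
  - rewrite !(psubst_var l _ o w x Wl Hx). rewrite length_app in Hp. apply H; auto; lia.
  - rewrite !psubst_no_var; auto.
Qed.

Lemma psubst_wf {S} (l : term S) F : wf l ->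
  (forall o x, l o = Some (inr x) -> wf (F o x)) -> wf (psubst l F).
Proof.
  intros Wl WF. split.
  - destruct (l []) as [[f|x]|] eqn:E.
    + rewrite psubst_no_var; [congruence|].
      intros [|] o2 Ho y; simpl in Ho; [congruence|discriminate].
    + rewrite <- (app_nil_r []), (psubst_var l F [] [] x Wl E). apply WF; auto.
    + destruct Wl; congruence.
  - intros p i. destruct (var_above_dec l p) as [[o [w [x [-> Hx]]]]|Hn].
    { rewrite <- app_assoc, !(psubst_var l _ o _ x Wl Hx). apply (WF o x Hx). }
    rewrite (psubst_no_var l F p Hn).
    destruct (var_above_dec l (p ++ [i])) as [[o [w [x [E Hx]]]]|Hn'].
    2: { rewrite psubst_no_var; auto. apply (proj2 Wl). }
    assert (Ho : o = p ++ [i]).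
    { destruct (prefix_comparable _ _ _ _ E) as [[[|j e] He]|[e He]].
      - rewrite app_nil_r in He. subst o.
        exfalso. exact (Hn p [] (eq_sym (app_nil_r _)) x Hx).
      - subst o. assert (Hlen := f_equal (@length nat) E). rewrite !length_app in Hlen.
        simpl in Hlen. destruct e; [|simpl in Hlen; lia]. destruct w; [|simpl in Hlen; lia].
        rewrite app_nil_r in E. apply app_inv_head in E. congruence.
      - subst p. exfalso. exact (Hn o e eq_refl x Hx). }
    subst o. rewrite <- (app_nil_r (p ++ [i])) at 1.
    rewrite (psubst_var l F _ [] x Wl Hx).
    split; intros _.
    + apply (proj2 Wl). congruence.
    + exact (proj1 (WF _ x Hx)).
Qed.

(** * Well orders *)

Definition wle {A} (lt : A -> A -> Prop) a b := a = b \/ lt a b.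

Section WellOrder.
Variables (A : Type) (lt : A -> A -> Prop).
Hypothesis W : well_order lt.

Lemma wo_min (P : A -> Prop) : (exists x, P x) -> exists m, P m /\ forall y, lt y m -> ~ P y.
Proof.
  intros [x Hx]. revert Hx. induction x using (well_founded_induction (wo_wf W)).
  intro Hx. destruct (classic (exists y, lt y x /\ P y)) as [[y [Hy Py]]|N].
  - apply (H y Hy Py).
  - exists x. split; auto. intros y Hy Py. apply N; eauto.
Qed.

Lemma wle_trans a b c : wle lt a b -> wle lt b c -> wle lt a c.
Proof. intros [E|L] [E'|L']; subst; [left|right..]; auto. eapply wo_trans; eauto. Qed.

Lemma wle_lt_trans a b c : wle lt a b -> lt b c -> lt a c.
Proof. intros [E|L] L'; subst; auto. eapply wo_trans; eauto. Qed.

Lemma lt_wle_trans a b c : lt a b -> wle lt b c -> lt a c.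
Proof. intros L [E|L']; subst; auto. eapply wo_trans; eauto. Qed.

Lemma lt_not_wle a b : lt a b -> ~ wle lt b a.
Proof.
  intros H [E|L]; subst; [|apply (wo_irrefl W a); eapply wo_trans; eauto].
  eapply wo_irrefl; eauto.
Qed.

Lemma not_lt_wle a b : ~ lt a b -> wle lt b a.
Proof. intros H. destruct (wo_total W a b) as [L|[E|L]]; unfold wle; auto. contradiction. Qed.

Lemma succ_exists a b : lt a b -> exists c, is_succ lt a c /\ wle lt c b.
Proof.
  intros H. destruct (wo_min (fun c => lt a c)) as [c [Hc Hm]]; eauto.
  exists c. split.
  - split; auto. intros d [H1 H2]. apply (Hm d); auto.
  - apply not_lt_wle. intro L. apply (Hm b); auto.
Qed.

Lemma succ_wle_pred a b c : is_succ lt a c -> lt b c -> wle lt b a.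
Proof. intros [H1 H2] H. apply not_lt_wle. intro L. apply (H2 b); auto. Qed.

Lemma succ_wle a c c' : is_succ lt a c -> lt a c' -> wle lt c c'.
Proof. intros [H1 H2] H. apply not_lt_wle. intro L. apply (H2 c'). auto. Qed.

Lemma finite_max (l : list A) (P : A -> Prop) : (exists x, In x l /\ P x) ->
  exists y, P y /\ forall x, In x l -> P x -> wle lt x y.
Proof.
  induction l as [|a l IH]; intros [x [Hx Px]]; simpl in Hx; try contradiction.
  destruct (classic (exists x, In x l /\ P x)) as [H|H].
  - destruct (IH H) as [y [Py Hy]]. destruct (classic (P a)) as [Pa|Pa].
    + destruct (wo_total W a y) as [L|[E|L]].
      * exists y. split; auto. intros z [E|Hz] Pz; subst; auto. right; auto.
      * subst. exists y. split; auto. intros z [E|Hz] Pz; subst; auto. left; auto.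
      * exists a. split; auto. intros z [E|Hz] Pz; subst; [left; auto|].
        right. eapply wle_lt_trans; eauto.
    + exists y. split; auto. intros z [E|Hz] Pz; subst; auto. contradiction.
  - destruct Hx as [E|Hx]; [|exfalso; eauto]. subst.
    exists x. split; auto. intros z [E|Hz] Pz; subst; [left; auto|]. exfalso. eauto.
Qed.

Lemma finite_no_limit (l : list A) : (forall a, In a l) -> forall c, ~ is_limit lt c.
Proof.
  intros Hl c [[a Ha] Hnp].
  destruct (finite_max l (fun d => lt d c)) as [d [Hd Hm]]; eauto.
  apply Hnp. exists d. split; auto. intros e [H1 H2]. apply (lt_not_wle _ _ H1). apply Hm; auto.
Qed.

Lemma finite_has_max (l : list A) : (forall a, In a l) -> forall a : A,
  exists y, forall x, wle lt x y.
Proof.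
  intros Hl a. destruct (finite_max l (fun _ => True)) as [y [_ Hy]]; [exists a; auto|].
  exists y. intro x. apply Hy; auto.
Qed.

End WellOrder.

Lemma wo_cases {A} (lt : A -> A -> Prop) c :
  is_min lt c \/ (exists a, is_succ lt a c) \/ is_limit lt c.
Proof.
  destruct (classic (exists a, lt a c)) as [H|H].
  - destruct (classic (exists a, is_succ lt a c)); auto. right. right. split; auto.
  - left. intros b Hb. apply H; eauto.
Qed.

Lemma bounded_max (P : nat -> Prop) N : (exists n, P n /\ n <= N) ->
  exists n, P n /\ forall n', P n' -> n' <= N -> n' <= n.
Proof.
  induction N; intros [n [Pn Hn]].
  - exists n. split; auto. intros. lia.
  - destruct (classic (P (S N))) as [H|H]; [exists (S N); split; auto|].
    destruct IHN as [k [Pk Hk]].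
    + exists n. split; auto. destruct (Nat.eq_dec n (S N)); subst; [contradiction|lia].
    + exists k. split; auto. intros n' Pn' Hn'.
      destruct (Nat.eq_dec n' (S N)); subst; [contradiction|]. apply Hk; auto. lia.
Qed.

Definition sumlt {A B : Type} (l1 : A -> A -> Prop) (l2 : B -> B -> Prop) (x y : A + B) :=
  match x, y with
  | inl a, inl b => l1 a b
  | inr a, inr b => l2 a b
  | inl _, inr _ => True
  | inr _, inl _ => False
  end.

Lemma well_order_sum {A B} (l1 : A -> A -> Prop) (l2 : B -> B -> Prop) :
  well_order l1 -> well_order l2 -> well_order (sumlt l1 l2).
Proof.
  intros W1 W2. constructor.
  - intros [a|a] [b|b] [c|c]; simpl; try tauto; eapply wo_trans; eauto.
  - intros [a|a]; simpl; eapply wo_irrefl; eauto.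
  - intros [a|a] [b|b]; simpl; auto.
    + destruct (wo_total W1 a b) as [H|[H|H]]; subst; auto.
    + destruct (wo_total W2 a b) as [H|[H|H]]; subst; auto.
  - assert (HL : forall a, Acc (sumlt l1 l2) (inl a)).
    { intro a. induction a using (well_founded_induction (wo_wf W1)).
      constructor. intros [y|y] Hy; simpl in Hy; try contradiction. auto. }
    intros [a|b]; auto.
    induction b using (well_founded_induction (wo_wf W2)).
    constructor. intros [y|y] Hy; simpl in Hy; auto.
Qed.

Lemma well_order_sig {A} (lt : A -> A -> Prop) (P : A -> Prop) : well_order lt ->
  well_order (fun x y : {a | P a} => lt (proj1_sig x) (proj1_sig y)).
Proof.
  intros W. constructor.
  - intros a b c. apply (wo_trans W).
  - intros a. apply (wo_irrefl W).
  - intros [a Ha] [b Hb]. simpl. destruct (wo_total W a b) as [H|[H|H]]; auto.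
    subst. right; left. f_equal. apply proof_irrelevance.
  - apply (wf_inverse_image _ _ lt (@proj1_sig _ _)). apply (wo_wf W).
Qed.

Lemma no_max_unbounded {X} (P : X -> Prop) (f : X -> nat) N : (exists x, P x) ->
  (forall x, P x -> exists y, P y /\ f x < f y) -> exists x, P x /\ N < f x.
Proof.
  intros [x0 Hx0] NoMax. apply NNPP. intro NI.
  assert (Bd : forall x, P x -> f x <= N) by (intros x Hx; apply Nat.nlt_ge; intro L; eauto).
  destruct (bounded_max (fun n => exists x, P x /\ f x = n) N) as [n [[x [Hx <-]] Hmax]].
  { exists (f x0). split; eauto. }
  destruct (NoMax x Hx) as [y [Hy Ly]].
  assert (f y <= f x) by (apply Hmax; eauto). lia.
Qed.

(** * Convergent reductions *)

Definition conv_red {S} (T : TRS S) (a b : term S) :=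
  exists q, is_rseq T q /\ rs_src q = a /\ conv_target q b.

Definition eventually {A} (lt : A -> A -> Prop) (D : A -> Prop) (P : nat -> A -> Prop) :=
  forall k, exists a, D a /\ forall c, D c -> wle lt a c -> P k c.

Definition strongly_conv {S A} (lt : A -> A -> Prop) (D : A -> Prop) (st : A -> step S)
  (v : term S) :=
  conv_on lt D (fun c => st_tgt (st c)) v /\ depth_inf_on lt D (fun c => st_depth (st c)).

Lemma eventually_embed {A B} (ltA : A -> A -> Prop) (ltB : B -> B -> Prop) (h : A -> B)
  DA DB (P : nat -> B -> Prop) :
  (forall a, DA a -> DB (h a)) ->
  (forall a b, DA a -> DB b -> wle ltB (h a) b -> exists a', b = h a' /\ DA a' /\ wle ltA a a') ->
  eventually ltA DA (fun k a => P k (h a)) -> eventually ltB DB P.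
Proof.
  intros H1 H2 H k. destruct (H k) as [a [Ha Hc]]. exists (h a). split; auto.
  intros c Dc Hac. destruct (H2 a c Ha Dc Hac) as [a' [-> [Da' Ha']]]. apply Hc; auto.
Qed.

Lemma strongly_conv_embed {S A B} (ltA : A -> A -> Prop) (ltB : B -> B -> Prop) (h : A -> B)
  DA DB (stA : A -> step S) stB v :
  (forall a, stB (h a) = stA a) -> (forall a, DA a -> DB (h a)) ->
  (forall a b, DA a -> DB b -> wle ltB (h a) b -> exists a', b = h a' /\ DA a' /\ wle ltA a a') ->
  strongly_conv ltA DA stA v -> strongly_conv ltB DB stB v.
Proof.
  intros Hst H1 H2 [Cv Dp]. split.
  - apply (eventually_embed ltA ltB h DA DB (fun k c => agree k (st_tgt (stB c)) v) H1 H2).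
    intro k. destruct (Cv k) as [a [Ha Hc]]. exists a. split; auto.
    intros c Dc Hac. rewrite Hst. auto.
  - apply (eventually_embed ltA ltB h DA DB (fun k c => k < st_depth (stB c)) H1 H2).
    intro k. destruct (Dp k) as [a [Ha Hc]]. exists a. split; auto.
    intros c Dc Hac. rewrite Hst. auto.
Qed.

Lemma strongly_conv_restrict {S A} (lt : A -> A -> Prop) (Q : A -> Prop) D
  (D' : {x | Q x} -> Prop) (st : A -> step S) v : well_order lt ->
  (forall x, D' x -> D (proj1_sig x)) ->
  (forall a, D a -> exists x, D' x /\ wle lt a (proj1_sig x)) ->
  strongly_conv lt D st v ->
  strongly_conv (fun x y => lt (proj1_sig x) (proj1_sig y)) D' (fun x => st (proj1_sig x)) v.
Proof.
  intros W H1 H2.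
  assert (Gen : forall P, eventually lt D P ->
            eventually (fun x y => lt (proj1_sig x) (proj1_sig y)) D' (fun k x => P k (proj1_sig x))).
  { intros P H k. destruct (H k) as [a [Da Hc]]. destruct (H2 a Da) as [x [Dx Hx]].
    exists x. split; auto. intros c Dc Hc'. apply Hc; auto.
    eapply wle_trans; eauto. destruct Hc' as [E|L]; [left; subst; auto|right; auto]. }
  intros [Cv Dp]. split; [exact (Gen _ Cv)|exact (Gen _ Dp)].
Qed.

Lemma conv_target_empty {S} (q : rseq S) v :
  conv_target q v -> ~ inhabited (rs_idx q) -> v = rs_src q.
Proof. intros [[_ E]|[[m _]|[[i] _]]] NI; auto; exfalso; apply NI; constructor; auto. Qed.

Lemma conv_target_last {S} (q : rseq S) v x : well_order (rs_lt q) ->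
  conv_target q v -> (forall a, wle (rs_lt q) a x) -> v = st_tgt (rs_step q x).
Proof.
  intros W [[NI _]|[[m [Hm ->]]|[_ [Hnm _]]]] Hx.
  - exfalso. apply NI. constructor. exact x.
  - destruct (Hx m) as [->|L]; auto. exfalso. exact (lt_not_wle _ _ W _ _ L (Hm x)).
  - exfalso. destruct (Hnm x) as [z Hz]. exact (lt_not_wle _ _ W _ _ Hz (Hx z)).
Qed.

Lemma conv_target_open {S} (q : rseq S) v : well_order (rs_lt q) ->
  conv_target q v -> inhabited (rs_idx q) -> (forall x, exists a, rs_lt q x a) ->
  wf v /\ strongly_conv (rs_lt q) (fun _ => True) (rs_step q) v.
Proof.
  intros W [[NI _]|[[m [Hm _]]|[_ [_ [Hv [Cv Dp]]]]]] Hi Hnm.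
  - contradiction.
  - exfalso. destruct (Hnm m) as [z Hz]. exact (lt_not_wle _ _ W _ _ Hz (Hm z)).
  - split; [|split]; auto.
Qed.

Lemma strongly_conv_dom_ext {S A} (lt : A -> A -> Prop) D D' (st : A -> step S) v :
  (forall x, D x <-> D' x) -> strongly_conv lt D st v -> strongly_conv lt D' st v.
Proof.
  intros H. apply (strongly_conv_embed lt lt id); auto; [intros a Ha; apply H; auto|].
  intros a b _ Hb Hab. exists b. split; [|split]; auto. apply H; auto.
Qed.

Definition rseq_concat {S} (q1 q2 : rseq S) : rseq S :=
  {| rs_src := rs_src q1; rs_idx := (rs_idx q1 + rs_idx q2)%type;
     rs_lt := sumlt (rs_lt q1) (rs_lt q2);
     rs_step := fun j => match j with inl x => rs_step q1 x | inr y => rs_step q2 y end |}.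

Section SumOrder.
Variables (A B : Type) (l1 : A -> A -> Prop) (l2 : B -> B -> Prop).

Lemma sum_succ_inl x y : is_succ (sumlt l1 l2) (inl x) (inl y) -> is_succ l1 x y.
Proof. intros [H1 H2]. split; auto. intros c Hc. apply (H2 (inl c)). auto. Qed.

Lemma sum_succ_inr x y : is_succ (sumlt l1 l2) (inr x) (inr y) -> is_succ l2 x y.
Proof. intros [H1 H2]. split; auto. intros c Hc. apply (H2 (inr c)). auto. Qed.

Lemma sum_limit_inl y : is_limit (sumlt l1 l2) (inl y) -> is_limit l1 y.
Proof.
  intros [[[z|z] Hz] Hnp]; simpl in Hz; try contradiction. split; eauto.
  intros [a [Ha1 Ha2]]. apply Hnp. exists (inl a). split; auto.
  intros [c|c] [Hc1 Hc2]; simpl in *; auto. apply (Ha2 c); auto.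
Qed.

Lemma sum_limit_inr y : is_limit (sumlt l1 l2) (inr y) -> (exists b, l2 b y) -> is_limit l2 y.
Proof.
  intros [_ Hnp] Hb. split; auto.
  intros [a [Ha1 Ha2]]. apply Hnp. exists (inr a). split; auto.
  intros [c|c] [Hc1 Hc2]; simpl in *; auto. apply (Ha2 c); auto.
Qed.

Lemma strongly_conv_inl {S} DA DB (st1 : A -> step S) (st2 : B -> step S) v :
  (forall a, DB (inl a) <-> DA a) -> (forall b, ~ DB (inr b)) ->
  strongly_conv l1 DA st1 v ->
  strongly_conv (sumlt l1 l2) DB (fun j => match j with inl x => st1 x | inr y => st2 y end) v.
Proof.
  intros H1 H2. apply (strongly_conv_embed l1 _ inl); auto.
  - intros a Ha. apply H1; auto.
  - intros a [b|b] Ha Hb Hab; [|contradiction (H2 b)].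
    exists b. split; [|split]; auto. apply H1; auto.
    destruct Hab as [E|L]; [left; congruence|right; auto].
Qed.

Lemma strongly_conv_inr {S} DA DB (st1 : A -> step S) (st2 : B -> step S) v :
  (forall b, DB (inr b) <-> DA b) -> (forall a, DB (inl a)) ->
  strongly_conv l2 DA st2 v ->
  strongly_conv (sumlt l1 l2) DB (fun j => match j with inl x => st1 x | inr y => st2 y end) v.
Proof.
  intros H1 H2. apply (strongly_conv_embed l2 _ inr); auto.
  - intros a Ha. apply H1; auto.
  - intros a [b|b] Ha Hb Hab; [destruct Hab as [E|L]; [discriminate|contradiction]|].
    exists b. split; [|split]; auto. apply H1; auto.
    destruct Hab as [E|L]; [left; congruence|right; auto].
Qed.

End SumOrder.

Lemma rseq_concat_is_rseq {S} (T : TRS S) (q1 q2 : rseq S) :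
  is_rseq T q1 -> is_rseq T q2 -> conv_target q1 (rs_src q2) -> is_rseq T (rseq_concat q1 q2).
Proof.
  intros [Wf1 [W1 [V1 [M1 [Su1 L1]]]]] [Wf2 [W2 [V2 [M2 [Su2 L2]]]]] C1.
  split; [|split; [|split; [|split; [|split]]]]; simpl; auto.
  - apply well_order_sum; auto.
  - intros [x|y]; auto.
  - intros [x|y] Hm.
    + apply M1. intros z Hz. apply (Hm (inl z)). auto.
    + rewrite M2 by (intros z Hz; apply (Hm (inr z)); auto).
      apply conv_target_empty; auto. intros [z]. apply (Hm (inl z)). simpl. auto.
  - intros [x|x] [y|y] Hs; simpl in *; try (destruct Hs; contradiction).
    + apply Su1, (sum_succ_inl _ _ _ _ _ _ Hs).
    + rewrite M2 by (intros z Hz; apply (proj2 Hs (inr z)); simpl; auto).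
      apply (conv_target_last q1); auto.
      intro a. apply (not_lt_wle _ _ W1). intro L. apply (proj2 Hs (inl a)). simpl. auto.
    + apply Su2, (sum_succ_inr _ _ _ _ _ _ Hs).
  - intros [y|y] Hl.
    + apply (strongly_conv_inl _ _ _ _ (fun c => rs_lt q1 c y)); simpl; try tauto.
      apply L1, (sum_limit_inl _ _ _ _ _ Hl).
    + destruct (classic (exists b, rs_lt q2 b y)) as [Hb|Nb].
      * apply (strongly_conv_inr _ _ _ _ (fun c => rs_lt q2 c y)); simpl; try tauto.
        apply L2, (sum_limit_inr _ _ _ _ _ Hl Hb).
      * (* [inr y] is the limit of the whole of [q1] *)
        rewrite M2 by (intros z Hz; apply Nb; eauto).
        destruct Hl as [[[x|x] Hx] Hnp]; simpl in Hx; [|exfalso; apply Nb; eauto].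
        assert (Hnm : forall a, exists b, rs_lt q1 a b).
        { intro a. apply NNPP. intro N. apply Hnp. exists (inl a). split; simpl; auto.
          intros [c|c] [Hc1 Hc2]; simpl in *; [apply N|apply Nb]; eauto. }
        destruct (conv_target_open q1 _ W1 C1 (inhabits x) Hnm) as [_ Hcv].
        apply (strongly_conv_inl _ _ _ _ (fun _ => True)); simpl; auto.
        split; auto. intros b Hb. apply Nb. eauto.
Qed.

Lemma rseq_concat_conv_target {S} (T : TRS S) (q1 q2 : rseq S) v :
  well_order (rs_lt q1) -> well_order (rs_lt q2) ->
  conv_target q1 (rs_src q2) -> conv_target q2 v -> conv_target (rseq_concat q1 q2) v.
Proof.
  intros W1 W2 C1 C2.
  destruct C2 as [[NI2 ->]|[[m [Hm ->]]|[[i] [Hnm [Hw Hcv]]]]].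
  - destruct C1 as [[NI1 E]|[[m [Hm Em]]|[[i] [Hnm [Hw Hcv]]]]].
    + left. split; [|exact E].
      intros [[z|z]]; [apply NI1|apply NI2]; constructor; auto.
    + right. left. exists (inl m). split; auto. intros [a|a]; simpl.
      * destruct (Hm a) as [->|L]; [left|right]; auto.
      * exfalso. apply NI2. constructor. auto.
    + right. right. split; [constructor; exact (inl i)|]. split.
      * intros [x|x]; [destruct (Hnm x) as [z Hz]; exists (inl z); auto|].
        exfalso. apply NI2. constructor; auto.
      * split; auto. apply (strongly_conv_inl _ _ _ _ (fun _ => True)); [tauto| |exact Hcv].
        intros b _. apply NI2. constructor; auto.
  - right. left. exists (inr m). split; auto.
    intros [a|a]; simpl; auto. destruct (Hm a) as [->|L]; [left|right]; auto.
  - right. right. split; [constructor; exact (inr i)|]. split.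
    + intros [x|x]; [exists (inr i); simpl; auto|].
      destruct (Hnm x) as [z Hz]. exists (inr z). auto.
    + split; auto. apply (strongly_conv_inr _ _ _ _ (fun _ => True)); simpl; auto.
      tauto.
Qed.

Lemma conv_red_trans {S} (T : TRS S) a b c : conv_red T a b -> conv_red T b c -> conv_red T a c.
Proof.
  intros [q1 [R1 [<- C1]]] [q2 [R2 [E2 C2]]]. subst b.
  exists (rseq_concat q1 q2). split; [|split]; auto.
  - apply rseq_concat_is_rseq; auto.
  - apply (rseq_concat_conv_target T); auto; [apply R1|apply R2].
Qed.

Definition rseq_after {S} (q : rseq S) (m : rs_idx q) : rseq S :=
  {| rs_src := st_tgt (rs_step q m); rs_idx := {c | rs_lt q m c};
     rs_lt := fun x y => rs_lt q (proj1_sig x) (proj1_sig y);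
     rs_step := fun x => rs_step q (proj1_sig x) |}.

Section After.
Variables (S : signature) (T : TRS S) (q : rseq S) (m : rs_idx q) (u : term S).
Hypotheses (R : is_rseq T q) (C : conv_target q u) (Wu : wf u).

Lemma rseq_after_is_rseq : is_rseq T (rseq_after q m).
Proof.
  destruct R as [Wf [W [V [M [Su L]]]]].
  split; [|split; [apply well_order_sig; auto|split; [intro x; apply V|split; [|split]]]]; simpl.
  - destruct (classic (exists c, rs_lt q m c)) as [[c Hc]|N].
    + destruct (succ_exists _ _ W _ _ Hc) as [c0 [Hs _]]. rewrite <- (Su _ _ Hs). apply V.
    + rewrite <- (conv_target_last q u m W C); [exact Wu|].
      intro a. apply (not_lt_wle _ _ W). intro L'. apply N. eauto.
  - intros [x Hx] Hmin. simpl. apply Su. split; auto.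
    intros c [H1 H2]. apply (Hmin (exist _ c H1)). simpl. auto.
  - intros [x Hx] [y Hy] [H1 H2]. simpl in *. apply Su. split; auto.
    intros c [Hc1 Hc2]. apply (H2 (exist _ c (wo_trans W _ _ _ Hx Hc1))). simpl. auto.
  - intros [y Hy] [[[x0 Hx0] Hb] Hnp]. simpl in *.
    assert (Ly : is_limit (rs_lt q) y).
    { split; eauto. intros [d [Hd1 Hd2]].
      destruct (wo_total W m d) as [H|[<-|H]].
      - apply Hnp. exists (exist _ d H). split; [exact Hd1|].
        intros [c Hc] [Hc1 Hc2]. simpl in *. apply (Hd2 c); auto.
      - apply (Hd2 x0). auto.
      - apply (Hd2 m). auto. }
    apply (strongly_conv_restrict _ _ (fun c => rs_lt q c y)); auto; [|apply L; auto].
    intros a Ha. destruct (wo_total W m a) as [H|[<-|H]].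
    + exists (exist _ a H). simpl. split; auto. left; auto.
    + exists (exist _ x0 Hx0). simpl. split; auto. right; auto.
    + exists (exist _ x0 Hx0). simpl. split; auto. right; eapply wo_trans; eauto.
Qed.

Lemma rseq_after_conv_target : conv_target (rseq_after q m) u.
Proof.
  pose proof (proj1 (proj2 R)) as W.
  destruct (classic (exists c, rs_lt q m c)) as [[c0 Hc0]|N].
  2: { left. split; [intros [[c Hc]]; apply N; eauto|]. simpl.
       apply (conv_target_last q u m W C). intro a. apply (not_lt_wle _ _ W). intro L'. apply N. eauto. }
  destruct (classic (exists c, forall a, wle (rs_lt q) a c)) as [[M0 HM]|NM].
  - right. left. assert (L' : rs_lt q m M0) by (eapply lt_wle_trans; eauto).
    exists (exist _ M0 L'). split; simpl.
    + intros [a Ha]. destruct (HM a) as [E|L2]; [left|right]; auto.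
      subst. f_equal. apply proof_irrelevance.
    + apply (conv_target_last q u M0 W C HM).
  - assert (Hnm : forall x, exists a, rs_lt q x a).
    { intro x. apply NNPP. intro N. apply NM. exists x. intro a.
      apply (not_lt_wle _ _ W). intro L'. apply N. eauto. }
    destruct (conv_target_open q u W C (inhabits m) Hnm) as [_ Hcv].
    right. right. split; [constructor; exact (exist _ c0 Hc0)|]. split.
    { intros [x Hx]. destruct (Hnm x) as [c Hc]. exists (exist _ c (wo_trans W _ _ _ Hx Hc)). auto. }
    split; auto. apply (strongly_conv_restrict _ _ (fun _ => True)); auto.
    intros a _. destruct (wo_total W m a) as [H|[<-|H]].
    + exists (exist _ a H). simpl. split; auto. left; auto.
    + exists (exist _ c0 Hc0). simpl. split; auto. right; auto.
    + exists (exist _ c0 Hc0). simpl. split; auto. right; eapply wo_trans; eauto.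
Qed.

Lemma conv_red_after : conv_red T (st_tgt (rs_step q m)) u.
Proof.
  exists (rseq_after q m). split; [|split]; auto.
  - apply rseq_after_is_rseq.
  - apply rseq_after_conv_target.
Qed.

End After.

(** * Patterns *)

Definition choose {A : Type} (d : A) (P : A -> Prop) : A :=
  match excluded_middle_informative (exists x, P x) with
  | left H => proj1_sig (constructive_indefinite_description P H)
  | right _ => d end.

Lemma choose_spec {A : Type} (d : A) (P : A -> Prop) : (exists x, P x) -> P (choose d P).
Proof.
  intro H. unfold choose. destruct (excluded_middle_informative _) as [H'|H']; [|contradiction].
  apply (proj2_sig (constructive_indefinite_description P H')).
Qed.

Lemma choose_default {A : Type} (d : A) (P : A -> Prop) : ~ (exists x, P x) -> choose d P = d.
Proof. intro H. unfold choose. destruct (excluded_middle_informative _); tauto. Qed.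

(* A position of the variable [x] in [l] (the root if [x] does not occur). *)
Definition var_pos {S} (l : term S) (x : var) : pos :=
  choose [] (fun p => l p = Some (inr x)).

Lemma var_pos_spec {S} (l : term S) x p : l p = Some (inr x) -> l (var_pos l x) = Some (inr x).
Proof. intro H. apply (choose_spec [] (fun p => l p = Some (inr x))). eauto. Qed.

Definition linear {S} (l : term S) :=
  forall p q x, l p = Some (inr x) -> l q = Some (inr x) -> p = q.

Lemma var_pos_unique {S} (l : term S) x p : linear l -> l p = Some (inr x) -> var_pos l x = p.
Proof. intros Hl H. apply (Hl _ _ x); auto. eapply var_pos_spec; eauto. Qed.

Lemma var_pos_inj {S} (l : term S) x y e1 e2 : wf l ->
  l (var_pos l x) = Some (inr x) -> l (var_pos l y) = Some (inr y) ->
  var_pos l x ++ e1 = var_pos l y ++ e2 -> x = y.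
Proof.
  intros Wl Hx Hy E. pose proof (wf_var_pos_eq l _ _ _ _ x y Wl Hx Hy E) as Ep.
  rewrite Ep in Hx. congruence.
Qed.

Definition has_pattern {S} (l t : term S) :=
  forall q f, l q = Some (inl f) -> t q = Some (inl f).

Lemma has_pattern_var_pos {S} (l t : term S) o x : wf l -> wf t -> has_pattern l t ->
  l o = Some (inr x) -> t o <> None.
Proof.
  intros Wl Wt I H. destruct o as [|i o'] using rev_ind; [apply (proj1 Wt)|].
  assert (l (o' ++ [i]) <> None) as Hn by congruence. apply (proj2 Wl) in Hn.
  destruct Hn as [f [Hf Ha]]. apply (proj2 Wt). exists f. split; auto.
Qed.

Definition matching_subst {S} (l t : term S) : var -> term S :=
  fun x => subterm t (var_pos l x).

Lemma matching_subst_wf {S} (l t : term S) : wf l -> wf t -> has_pattern l t ->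
  wf_subst (matching_subst l t).
Proof.
  intros Wl Wt I x. unfold matching_subst. apply wf_subterm; auto.
  destruct (classic (exists p, l p = Some (inr x))) as [[p Hp]|N].
  - apply (has_pattern_var_pos l t (var_pos l x) x Wl Wt I). eapply var_pos_spec; eauto.
  - unfold var_pos. rewrite choose_default; auto. apply (proj1 Wt).
Qed.

Lemma subterm_subst_var {S} (l : term S) sigma o x : wf l -> l o = Some (inr x) ->
  subterm (subst l sigma) o = sigma x.
Proof.
  intros Wl H. apply functional_extensionality. intro w. unfold subterm.
  rewrite subst_psubst, (psubst_var l _ o w x Wl H). auto.
Qed.

Lemma subst_has_pattern {S} (l : term S) sigma : wf l -> has_pattern l (subst l sigma).
Proof.
  intros Wl q f H. rewrite subst_psubst, psubst_no_var; auto. eapply no_var_above_fun; eauto.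
Qed.

Lemma has_pattern_subst {S} (l t : term S) : wf l -> linear l -> wf t -> has_pattern l t ->
  t = subst l (matching_subst l t).
Proof.
  intros Wl Ll Wt I. apply functional_extensionality. intro p. rewrite subst_psubst.
  destruct (var_above_dec l p) as [[o [w [x [-> Hx]]]]|Hn].
  { rewrite (psubst_var l _ o w x Wl Hx). unfold matching_subst, subterm.
    rewrite (var_pos_unique l x o Ll Hx). auto. }
  rewrite psubst_no_var; auto. induction p as [|i p IH] using rev_ind.
  - destruct (l []) as [[f|y]|] eqn:E; [apply I; auto| |].
    + exfalso. apply (Hn [] []) with y; auto.
    + exfalso. apply (proj1 Wl); auto.
  - specialize (IH (no_var_above_prefix l p [i] Hn)).
    destruct (l (p ++ [i])) as [[f|y]|] eqn:E; [apply I; auto| |].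
    + exfalso. apply (Hn (p ++ [i]) []) with y; rewrite ?app_nil_r; auto.
    + (* neither [l] nor [t] has a child [i] below [p] *)
      destruct (t (p ++ [i])) eqn:E'; auto. exfalso.
      assert (t (p ++ [i]) <> None) as Ht by congruence. apply (proj2 Wt) in Ht.
      destruct Ht as [f [Hf Ha]].
      destruct (l p) as [[g|y]|] eqn:E2; [|apply (Hn p [i]) with y; auto|congruence].
      rewrite Hf in IH. injection IH as <-.
      assert (exists f, l p = Some (inl f) /\ i < arity S f) as Hl by eauto.
      apply (proj2 Wl) in Hl. congruence.
Qed.

Lemma has_pattern_step {S} (l : term S) b : wf l -> has_pattern l (st_src b) ->
  (forall f, l (st_pos b) <> Some (inl f)) -> has_pattern l (st_tgt b).
Proof.
  intros Wl I Hp q f H. unfold st_tgt.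
  destruct (strip_cases (st_pos b) q) as [[[|n e] ->]|[_ Hn]].
  - rewrite app_nil_r in H. exfalso. apply (Hp f); auto.
  - destruct (wf_prefix_fun l (st_pos b) (n :: e) Wl) as [g Hg]; [congruence|discriminate|].
    exfalso. apply (Hp g); auto.
  - rewrite replace_out; auto.
Qed.

Lemma step_in_pattern_overlap {S} (T : TRS S) rho b f : non_overlapping T -> rules T rho ->
  wf (lhs rho) -> linear (lhs rho) -> valid_step T b -> has_pattern (lhs rho) (st_src b) ->
  lhs rho (st_pos b) = Some (inl f) -> st_pos b = [] /\ rho = st_rule b.
Proof.
  intros Ho Hr Wl Ll [Wb [Rb [Sb Eb]]] I Hf. apply NNPP. intro Hn. apply Ho.
  exists rho, (st_rule b), (matching_subst (lhs rho) (st_src b)), (st_sub b), (st_pos b).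
  refine (conj Hr (conj Rb (conj (matching_subst_wf _ _ Wl Wb I)
    (conj Sb (conj (ex_intro _ f Hf) (conj _ Hn)))))).
  rewrite <- has_pattern_subst; auto.
Qed.

(* The contractum [r σ] of a redex [t = l σ], computed from [t] alone. *)
Definition contract {S} (l r t : term S) : term S :=
  psubst r (fun _ x => subterm t (var_pos l x)).

Lemma subst_rhs_contract {S} (l r : term S) sigma : wf l -> wf r ->
  (forall p x, r p = Some (inr x) -> exists q, l q = Some (inr x)) ->
  subst r sigma = contract l r (subst l sigma).
Proof.
  intros Wl Wr Hv. unfold contract. rewrite subst_psubst. apply psubst_ext; auto.
  intros o x Hx. destruct (Hv o x Hx) as [q Hq].
  rewrite subterm_subst_var with (x := x); auto. eapply var_pos_spec; eauto.
Qed.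

Definition below_var {S} (l : term S) (p : pos) :=
  exists x w, l (var_pos l x) = Some (inr x) /\ p = var_pos l x ++ w.

Section RuleFacts.
Variables (S : signature) (T : TRS S) (rho : rule S).
Hypothesis rho_rule : rules T rho.

Lemma rule_lhs_wf : wf (lhs rho).
Proof. apply (rules_ok T rho rho_rule). Qed.

Lemma rule_rhs_wf : wf (rhs rho).
Proof. apply (rules_ok T rho rho_rule). Qed.

Lemma rule_rhs_var_in_lhs p x : rhs rho p = Some (inr x) ->
  lhs rho (var_pos (lhs rho) x) = Some (inr x).
Proof.
  intros H. destruct (rules_ok T rho rho_rule) as [_ [_ [_ [_ Hv]]]].
  destruct (Hv p x H) as [q0 Hq]. eapply var_pos_spec; eauto.
Qed.

Lemma rule_lhs_depth_bound : exists nl, forall p, lhs rho p <> None -> length p <= nl.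
Proof.
  destruct (rules_ok T rho rho_rule) as [_ [_ [[n Hn] _]]].
  exists n. intros p H. apply Nat.nlt_ge. intro L. apply H, Hn, L.
Qed.

End RuleFacts.

(** * Numerical codes of positions *)

Fixpoint pos_code (p : pos) : nat :=
  match p with [] => 0 | i :: p' => S (Cantor.to_nat (i, pos_code p')) end.

Lemma pos_code_inj p p' : pos_code p = pos_code p' -> p = p'.
Proof.
  revert p'. induction p as [|i p IH]; intros [|j p'] H; cbn [pos_code] in H;
    try discriminate; auto.
  injection H as H'. injection (Cantor.to_nat_inj (i, pos_code p) (j, pos_code p') H').
  intros. f_equal; auto.
Qed.

Lemma to_nat_mono x y x' y' : x <= x' -> y <= y' -> Cantor.to_nat (x, y) <= Cantor.to_nat (x', y').
Proof.
  intros H1 H2. pose proof (Cantor.to_nat_spec x y). pose proof (Cantor.to_nat_spec x' y').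
  assert ((y + x) * S (y + x) <= (y' + x') * S (y' + x')) by (apply Nat.mul_le_mono; lia).
  lia.
Qed.

(* the largest code of a position of length [n] with entries at most [A] *)
Fixpoint pos_code_bound (A n : nat) : nat :=
  match n with 0 => 0 | S n => S (Cantor.to_nat (A, pos_code_bound A n)) end.

Lemma pos_code_bound_mono A n n' : n <= n' -> pos_code_bound A n <= pos_code_bound A n'.
Proof.
  intro H. induction H; auto. cbn [pos_code_bound].
  pose proof (Cantor.to_nat_non_decreasing A (pos_code_bound A m)). lia.
Qed.

Lemma pos_code_le_bound A p : Forall (fun i => i <= A) p -> pos_code p <= pos_code_bound A (length p).
Proof.
  induction p as [|i p IH]; intro H; cbn [pos_code length pos_code_bound]; auto.
  inversion H; subst. apply le_n_S, to_nat_mono; auto.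
Qed.

Lemma arity_bound S : exists A, forall f, arity S f <= A.
Proof.
  destruct (sym_finite S) as [l Hl]. exists (fold_right max 0 (map (arity S) l)).
  intro f. specialize (Hl f). induction l; simpl in *; try contradiction.
  destruct Hl as [E|H]; subst; lia || (specialize (IHl H); lia).
Qed.

Lemma wf_pos_entries {S} (t : term S) A p : wf t -> (forall f, arity S f <= A) ->
  t p <> None -> Forall (fun i => i <= A) p.
Proof.
  intros Wt HA. induction p as [|i p IH] using rev_ind; intro H; auto.
  pose proof H as H'. apply (proj2 Wt) in H'. destruct H' as [f [Hf Hi]].
  apply Forall_app. split; [apply IH; congruence|]. constructor; auto. specialize (HA f). lia.
Qed.

Lemma pos_code_bounded_depth {S} (r : term S) K : wf r ->
  exists N, forall o, r o <> None -> length o <= K -> pos_code o <= N.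
Proof.
  intro Wr. destruct (arity_bound S) as [A HA]. exists (pos_code_bound A K). intros o Ho Hl.
  eapply Nat.le_trans; [apply pos_code_le_bound, (wf_pos_entries r A o Wr HA Ho)|].
  apply pos_code_bound_mono; auto.
Qed.

(** * Lifting a reduction into the contractum *)

Section Lifting.
Variables (S : signature) (T : TRS S) (rho : rule S) (q : rseq S) (m : rs_idx q).
Hypotheses (rho_rule : rules T rho) (q_rseq : is_rseq T q)
  (pattern_upto : forall c, wle (rs_lt q) c m -> has_pattern (lhs rho) (st_src (rs_step q c)))
  (below_var_before : forall c, rs_lt q c m -> below_var (lhs rho) (st_pos (rs_step q c))).

Local Notation l := (lhs rho).
Local Notation r := (rhs rho).
Local Notation lt := (rs_lt q).
Local Notation src c := (st_src (rs_step q c)).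
Local Notation tgt c := (st_tgt (rs_step q c)).

Lemma rseq_wo : well_order lt.
Proof. apply q_rseq. Qed.

Local Notation lhs_wf := (rule_lhs_wf _ T rho rho_rule).
Local Notation rhs_wf := (rule_rhs_wf _ T rho rho_rule).
Local Notation rhs_var_in_lhs := (rule_rhs_var_in_lhs _ T rho rho_rule).

Definition step_split c : var * pos :=
  choose (0, []) (fun xw => l (var_pos l (fst xw)) = Some (inr (fst xw)) /\
                            st_pos (rs_step q c) = var_pos l (fst xw) ++ snd xw).
Definition step_var c := fst (step_split c).
Definition step_offset c := snd (step_split c).

Lemma step_pos_split c : lt c m ->
  l (var_pos l (step_var c)) = Some (inr (step_var c)) /\
  st_pos (rs_step q c) = var_pos l (step_var c) ++ step_offset c.
Proof.
  intros H. destruct (below_var_before c H) as [x [w Hxw]].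
  apply (choose_spec (0, []) (fun xw => l (var_pos l (fst xw)) = Some (inr (fst xw)) /\
           st_pos (rs_step q c) = var_pos l (fst xw) ++ snd xw)).
  exists (x, w). auto.
Qed.

Lemma succ_src c : lt c m -> exists c', is_succ lt c c' /\ wle lt c' m /\ tgt c = src c'.
Proof.
  intros H. destruct (succ_exists _ _ rseq_wo _ _ H) as [c' [Hs Hl]].
  exists c'. split; [|split]; auto. symmetry. apply q_rseq. auto.
Qed.

Lemma rseq_src_wf c : wf (src c).
Proof. apply q_rseq. Qed.

Lemma tgt_wf_pattern c : lt c m -> wf (tgt c) /\ has_pattern l (tgt c).
Proof.
  intros H. destruct (succ_src c H) as [c' [_ [Hl ->]]]. split; [apply rseq_src_wf|auto].
Qed.

Lemma src_arg_wf c x : wle lt c m -> l (var_pos l x) = Some (inr x) ->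
  wf (subterm (src c) (var_pos l x)).
Proof.
  intros H Hx. apply wf_subterm; [apply rseq_src_wf|].
  apply (has_pattern_var_pos l _ _ x lhs_wf (rseq_src_wf c) (pattern_upto c H) Hx).
Qed.

Lemma tgt_arg_wf c x : lt c m -> l (var_pos l x) = Some (inr x) ->
  wf (subterm (tgt c) (var_pos l x)).
Proof.
  intros H Hx. destruct (tgt_wf_pattern c H) as [W1 I1]. apply wf_subterm; auto.
  apply (has_pattern_var_pos l _ _ x lhs_wf W1 I1 Hx).
Qed.

Lemma tgt_arg_other_var c y : lt c m -> l (var_pos l y) = Some (inr y) -> y <> step_var c ->
  subterm (tgt c) (var_pos l y) = subterm (src c) (var_pos l y).
Proof.
  intros H Hy Hne. destruct (step_pos_split c H) as [Hx E].
  unfold st_tgt. apply subterm_replace_out; rewrite E; intros e E'.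
  - apply Hne. symmetry. eapply (var_pos_inj l); eauto. apply lhs_wf.
  - apply Hne. rewrite <- app_assoc in E'.
    eapply (var_pos_inj l y _ []); eauto; [apply lhs_wf|rewrite app_nil_r; eauto].
Qed.

Definition copy_at c o := r o = Some (inr (step_var c)).

(* The contractum at a term in which the copies of step [c] at the occurrences
   selected by [P] have already been performed. *)
Definition mixed_contract c (P : pos -> bool) : term S :=
  psubst r (fun o x => if P o then subterm (tgt c) (var_pos l x)
                        else subterm (src c) (var_pos l x)).

Lemma mixed_contract_none c : mixed_contract c (fun _ => false) = contract l r (src c).
Proof. reflexivity. Qed.

Lemma mixed_contract_all c : mixed_contract c (fun _ => true) = contract l r (tgt c).
Proof. reflexivity. Qed.

Lemma mixed_contract_ext c P P' : lt c m ->
  (forall o, copy_at c o -> P o = P' o) -> mixed_contract c P = mixed_contract c P'.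
Proof.
  intros H HP. apply psubst_ext; [apply rhs_wf|].
  intros o x Hx. destruct (Nat.eq_dec x (step_var c)) as [->|N]; [rewrite HP; auto|].
  rewrite (tgt_arg_other_var c x); auto; [|eapply rhs_var_in_lhs; eauto].
  destruct (P o), (P' o); auto.
Qed.

Lemma mixed_contract_wf c P : lt c m -> wf (mixed_contract c P).
Proof.
  intros H. apply psubst_wf; [apply rhs_wf|]. intros o x Hx.
  pose proof (rhs_var_in_lhs o x Hx). destruct (P o).
  - apply tgt_arg_wf; auto.
  - apply src_arg_wf; auto. right; auto.
Qed.

Lemma contract_src_wf c : wle lt c m -> wf (contract l r (src c)).
Proof.
  intros H. apply psubst_wf; [apply rhs_wf|]. intros o x Hx.
  apply src_arg_wf; auto. eapply rhs_var_in_lhs; eauto.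
Qed.

(* Performing the copy of step [c] at the occurrence [o] switches [o] from
   the source to the target of [c]. *)
Lemma mixed_contract_step c o : lt c m -> copy_at c o ->
  replace (mixed_contract c (fun o' => pos_code o' <? pos_code o)) (o ++ step_offset c)
    (subst (rhs (st_rule (rs_step q c))) (st_sub (rs_step q c)))
  = mixed_contract c (fun o' => pos_code o' <=? pos_code o).
Proof.
  intros H Ho. pose proof rhs_wf as Wr. destruct (step_pos_split c H) as [Hx Ep].
  apply functional_extensionality. intro p. unfold mixed_contract at 2.
  destruct (var_above_dec r p) as [[o' [w' [y [-> Hy]]]]|Hn].
  - rewrite (psubst_var _ _ o' w' y Wr Hy).
    destruct (list_eq_dec Nat.eq_dec o' o) as [->|Ne].
    + rewrite Nat.leb_refl. unfold copy_at in Ho. rewrite Ho in Hy. injection Hy as <-.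
      rewrite replace_below. unfold mixed_contract.
      rewrite (subterm_psubst_var _ _ o (step_var c) Wr Ho), Nat.ltb_irrefl.
      unfold st_tgt. rewrite Ep, subterm_replace_in. reflexivity.
    + rewrite replace_out.
      * unfold mixed_contract. rewrite (psubst_var _ _ o' w' y Wr Hy).
        assert (pos_code o' <> pos_code o) by (intro E'; apply Ne, pos_code_inj; auto).
        destruct (pos_code o' <? pos_code o) eqn:E1; destruct (pos_code o' <=? pos_code o) eqn:E2;
          auto; [apply Nat.ltb_lt in E1; apply Nat.leb_nle in E2
                |apply Nat.ltb_nlt in E1; apply Nat.leb_le in E2]; lia.
      * intros e E. apply Ne. rewrite <- app_assoc in E.
        apply (wf_var_pos_eq _ o' o w' _ y (step_var c) Wr Hy Ho E).
  - rewrite replace_out.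
    + unfold mixed_contract. rewrite !psubst_no_var; auto.
    + intros e E. apply (Hn o (step_offset c ++ e)) with (step_var c); auto.
      rewrite E, app_assoc; reflexivity.
Qed.

Definition args_agree K (t1 t2 : term S) :=
  forall y, (exists o, r o = Some (inr y)) ->
  agree K (subterm t1 (var_pos l y)) (subterm t2 (var_pos l y)).

Lemma args_agree_refl K t : args_agree K t t.
Proof. intros y _ p _. auto. Qed.

Lemma args_agree_trans K t1 t2 t3 : args_agree K t1 t2 -> args_agree K t2 t3 -> args_agree K t1 t3.
Proof. intros H1 H2 y Hy. eapply agree_trans; eauto. Qed.

Lemma contract_agree K t1 t2 : args_agree K t1 t2 -> agree K (contract l r t1) (contract l r t2).
Proof.
  intros H. apply psubst_agree; [apply rhs_wf|]. intros o x Hx Ho.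
  apply agree_mono with K; [lia|]. apply H. eauto.
Qed.

Lemma contract_eq t1 t2 : (forall K, args_agree K t1 t2) -> contract l r t1 = contract l r t2.
Proof.
  intros H. apply psubst_ext; [apply rhs_wf|]. intros o x Hx.
  apply agree_all. intro K. apply H. eauto.
Qed.

Lemma mixed_contract_agree c P K t : args_agree K (src c) t -> args_agree K (tgt c) t ->
  agree K (mixed_contract c P) (contract l r t).
Proof.
  intros H1 H2. apply psubst_agree; [apply rhs_wf|].
  intros o x Hx Ho. apply agree_mono with K; [lia|]. destruct (P o); [apply H2|apply H1]; eauto.
Qed.

Definition invisible K c := (~ exists o, copy_at c o) \/ K < length (step_offset c).

Lemma invisible_args_agree c K : lt c m -> invisible K c -> args_agree K (src c) (tgt c).
Proof.
  intros H Hh y [o Hy]. destruct (Nat.eq_dec y (step_var c)) as [->|N].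
  - destruct Hh as [Hh|Hh]; [exfalso; apply Hh; exists o; apply Hy|].
    destruct (step_pos_split c H) as [Hx Ep].
    unfold st_tgt. rewrite Ep, subterm_replace_in.
    intros p Hp. rewrite replace_out; auto. intros e ->. rewrite length_app in Hp. lia.
  - rewrite (tgt_arg_other_var c y); auto; [apply args_agree_refl; eauto|eapply rhs_var_in_lhs; eauto].
Qed.

(* At a limit the targets agree up to depth [K + nl], which covers the
   arguments of [l]. *)
Lemma args_agree_invisible_segment K c1 c2 : wle lt c1 c2 -> wle lt c2 m ->
  (forall d, wle lt c1 d -> lt d c2 -> invisible K d) -> args_agree K (src c1) (src c2).
Proof.
  pose proof rseq_wo as W. destruct (rule_lhs_depth_bound _ T rho rho_rule) as [nl Hnl].
  destruct q_rseq as [_ [_ [_ [_ [Su Li]]]]].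
  induction c2 as [c2 IH] using (well_founded_induction (wo_wf W)).
  intros H12 H2m Hh. destruct H12 as [<-|L12]; [apply args_agree_refl|].
  assert (Hc2m : forall d, lt d c2 -> lt d m) by (intros; eapply lt_wle_trans; eauto).
  destruct (wo_cases lt c2) as [Hm|[[d Hd]|Hl]].
  - exfalso. apply (Hm c1 L12).
  - assert (Hld : wle lt c1 d) by (eapply succ_wle_pred; eauto).
    rewrite (Su _ _ Hd). apply args_agree_trans with (src d).
    + apply IH; auto; [apply Hd|right; apply Hc2m, Hd|].
      intros d' H1 H2. apply Hh; auto. eapply wo_trans; eauto. apply Hd.
    + apply invisible_args_agree; [apply Hc2m, Hd|]. apply Hh; auto. apply Hd.
  - destruct (proj1 (Li c2 Hl) (nl + K)) as [a [Ha Hc]].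
    assert (Ex : exists e, lt e c2 /\ wle lt a e /\ wle lt c1 e).
    { destruct (wo_total W a c1) as [L|[<-|L]].
      - exists c1. split; [|split]; auto; [right|left]; auto.
      - exists a. split; [|split]; auto; left; auto.
      - exists a. split; [|split]; auto; [left|right]; auto. }
    destruct Ex as [e [He1 [He2 He3]]].
    apply args_agree_trans with (src e); [|apply args_agree_trans with (tgt e)].
    + apply IH; auto. right. apply Hc2m; auto.
      intros d' H1 H2. apply Hh; auto. eapply wo_trans; eauto.
    + apply invisible_args_agree; auto.
    + intros y [o Hy]. apply agree_subterm.
      assert (length (var_pos l y) <= nl) by (apply Hnl; rewrite (rhs_var_in_lhs o y Hy); discriminate).
      apply agree_mono with (nl + K); [lia|]. apply Hc; auto.
Qed.

(* Visible steps cannot accumulate below [m]: at a limit the steps become deeper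
   than [K + nl], hence invisible. *)
Lemma last_visible c' K : wle lt c' m ->
  (forall c, lt c c' -> invisible K c) \/
  (exists e, lt e c' /\ ~ invisible K e /\
     forall c, lt c c' -> ~ invisible K c -> wle lt c e).
Proof.
  intros Hc'. pose proof rseq_wo as W. destruct (rule_lhs_depth_bound _ T rho rho_rule) as [nl Hnl].
  destruct q_rseq as [_ [_ [_ [_ [_ Li]]]]].
  set (Vis := fun c => lt c c' /\ ~ invisible K c).
  destruct (classic (exists c, Vis c)) as [[h0 Hh0]|N].
  2: { left. intros c Hc. apply NNPP. intro Nc. apply N. exists c. split; auto. }
  right. apply NNPP. intro NM.
  assert (NoMax : forall e, Vis e -> exists h, Vis h /\ lt e h).
  { intros e He. apply NNPP. intro N. apply NM. exists e. split; [apply He|split; [apply He|]].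
    intros c Hc Hv. apply (not_lt_wle _ _ W). intro L. apply N. exists c. split; auto; split; auto. }
  set (UB := fun d => wle lt d c' /\ forall h, Vis h -> lt h d).
  destruct (wo_min _ _ W UB) as [d [[Hd1 Hd2] Hdm]].
  { exists c'. split; [left; auto|]. intros h Hh. apply Hh. }
  destruct (wo_cases lt d) as [Hm|[[p Hp]|Hl]].
  - apply (Hm h0). apply Hd2; auto.
  - destruct (classic (Vis p)) as [Fp|Fp].
    + destruct (NoMax p Fp) as [h [Fh Lh]]. apply (lt_not_wle _ _ W _ _ Lh).
      eapply succ_wle_pred; eauto.
    + apply (Hdm p); [apply Hp|]. split.
      * right. eapply lt_wle_trans; eauto. apply Hp.
      * intros h Fh. destruct (succ_wle_pred _ _ W _ _ _ Hp (Hd2 h Fh)) as [->|L]; auto.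
        contradiction.
  - destruct (proj2 (Li d Hl) (K + nl)) as [a [Ha Hc]].
    assert (Ex : exists h, Vis h /\ wle lt a h).
    { apply NNPP. intro N. apply (Hdm a Ha). split; [right; eapply lt_wle_trans; eauto|].
      intros h Fh. apply NNPP. intro N2. apply N. exists h. split; auto.
      apply (not_lt_wle _ _ W _ _ N2). }
    destruct Ex as [h [Fh Lah]]. specialize (Hc h (Hd2 h Fh) Lah).
    apply (proj2 Fh). right.
    assert (Hhm : lt h m) by (eapply (lt_wle_trans _ _ W); [apply Fh|auto]).
    destruct (step_pos_split h Hhm) as [Hx Ep]. unfold st_depth in Hc.
    rewrite Ep, length_app in Hc.
    assert (length (var_pos l (step_var h)) <= nl) by (apply Hnl; rewrite Hx; discriminate).
    lia.
Qed.


Definition copy_idx : Type := {j : rs_idx q * pos | lt (fst j) m /\ copy_at (fst j) (snd j)}.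
Definition copy_step (j : copy_idx) := fst (proj1_sig j).
Definition copy_pos (j : copy_idx) := snd (proj1_sig j).
Definition copy_lt (j j' : copy_idx) :=
  lt (copy_step j) (copy_step j') \/
  (copy_step j = copy_step j' /\ pos_code (copy_pos j) < pos_code (copy_pos j')).

Definition copy_rstep (j : copy_idx) : step S :=
  {| st_src := mixed_contract (copy_step j) (fun o' => pos_code o' <? pos_code (copy_pos j));
     st_pos := copy_pos j ++ step_offset (copy_step j);
     st_rule := st_rule (rs_step q (copy_step j));
     st_sub := st_sub (rs_step q (copy_step j)) |}.

Lemma copy_step_lt (j : copy_idx) : lt (copy_step j) m.
Proof. apply (proj2_sig j). Qed.

Lemma copy_pos_at (j : copy_idx) : copy_at (copy_step j) (copy_pos j).
Proof. apply (proj2_sig j). Qed.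

Definition mk_copy c o (H1 : lt c m) (H2 : copy_at c o) : copy_idx := exist _ (c, o) (conj H1 H2).

Lemma copy_step_mk c o H1 H2 : copy_step (mk_copy c o H1 H2) = c.
Proof. reflexivity. Qed.

Lemma copy_pos_mk c o H1 H2 : copy_pos (mk_copy c o H1 H2) = o.
Proof. reflexivity. Qed.

Lemma copy_eq (j j' : copy_idx) : copy_step j = copy_step j' -> copy_pos j = copy_pos j' -> j = j'.
Proof.
  destruct j as [[c o] H], j' as [[c' o'] H']. unfold copy_step, copy_pos. simpl.
  intros <- <-. f_equal. apply proof_irrelevance.
Qed.

Lemma copy_lt_wo : well_order copy_lt.
Proof.
  pose proof rseq_wo as W. unfold copy_lt. constructor.
  - intros a b c [H1|[E1 H1]] [H2|[E2 H2]].
    + left. eapply wo_trans; eauto.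
    + left. rewrite <- E2. auto.
    + left. rewrite E1. auto.
    + right. split; [congruence|lia].
  - intros a [H|[_ H]]; [eapply wo_irrefl; eauto|lia].
  - intros a b. destruct (wo_total W (copy_step a) (copy_step b)) as [H|[H|H]]; auto.
    destruct (lt_eq_lt_dec (pos_code (copy_pos a)) (pos_code (copy_pos b))) as [[H'|H']|H']; auto.
    right; left. apply copy_eq; auto. apply pos_code_inj; auto.
  - assert (H : forall c n (j : copy_idx), copy_step j = c -> pos_code (copy_pos j) = n -> Acc copy_lt j).
    { intro c. induction c as [c IHc] using (well_founded_induction (wo_wf W)).
      intro n. induction n as [n IHn] using (well_founded_induction lt_wf).
      intros j <- <-. constructor. intros j' [H|[E H]].
      - apply (IHc (copy_step j') H (pos_code (copy_pos j'))); auto.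
      - apply (IHn (pos_code (copy_pos j')) H); auto. }
    intro j. apply (H (copy_step j) (pos_code (copy_pos j))); auto.
Qed.

Lemma copy_lt_wle (j j' : copy_idx) : wle copy_lt j j' -> wle lt (copy_step j) (copy_step j').
Proof. intros [->|[L|[E L]]]; [left|right|left]; auto. Qed.

Lemma copy_rstep_valid (j : copy_idx) : valid_step T (copy_rstep j).
Proof.
  pose proof (copy_step_lt j) as Hc. pose proof (copy_pos_at j) as Ho.
  destruct q_rseq as [_ [_ [V _]]]. destruct (V (copy_step j)) as [_ [R [Sb E]]].
  split; [|split; [|split]]; simpl; auto.
  - apply mixed_contract_wf; auto.
  - rewrite <- subterm_app. unfold mixed_contract.
    rewrite (subterm_psubst_var _ _ _ _ rhs_wf Ho), Nat.ltb_irrefl, subterm_app.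
    destruct (step_pos_split _ Hc) as [_ Ep]. rewrite <- Ep. auto.
Qed.

Lemma copy_rstep_tgt (j : copy_idx) :
  st_tgt (copy_rstep j) = mixed_contract (copy_step j) (fun o' => pos_code o' <=? pos_code (copy_pos j)).
Proof. apply mixed_contract_step; [apply copy_step_lt|apply copy_pos_at]. Qed.

Lemma contract_src_const c1 c' : wle lt c1 c' -> wle lt c' m ->
  (forall d, wle lt c1 d -> lt d c' -> ~ exists o, copy_at d o) ->
  contract l r (src c1) = contract l r (src c').
Proof.
  intros H1 H2 H. apply contract_eq. intro K.
  apply args_agree_invisible_segment; auto. intros d Hd1 Hd2. left. apply H; auto.
Qed.

Lemma contract_tgt_src_const c c' : lt c c' -> wle lt c' m ->
  (forall d, lt c d -> lt d c' -> ~ exists o, copy_at d o) ->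
  contract l r (tgt c) = contract l r (src c').
Proof.
  intros H1 H2 H. pose proof rseq_wo as W.
  destruct (succ_src c (lt_wle_trans _ _ W _ _ _ H1 H2)) as [c1 [Hs [_ ->]]].
  apply contract_src_const; [eapply succ_wle; eauto|auto|].
  intros d Hd1 Hd2. apply H; auto. apply (lt_wle_trans _ _ W _ c1); auto. apply Hs.
Qed.

Lemma copy_rstep_near K c' j : wle lt c' m -> lt (copy_step j) c' ->
  (forall d, wle lt (copy_step j) d -> lt d c' -> invisible K d) ->
  agree K (st_tgt (copy_rstep j)) (contract l r (src c')) /\ K < st_depth (copy_rstep j).
Proof.
  intros Hc' Hj Hh. pose proof rseq_wo as W. split.
  - rewrite copy_rstep_tgt. apply mixed_contract_agree.
    + apply args_agree_invisible_segment; auto. right; auto.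
    + destruct (succ_src _ (copy_step_lt j)) as [c1 [Hs [_ ->]]].
      apply args_agree_invisible_segment; auto; [eapply succ_wle; eauto|].
      intros d H1 H2. apply Hh; auto. right. apply (lt_wle_trans _ _ W _ c1); auto. apply Hs.
  - unfold st_depth. simpl. rewrite length_app.
    destruct (Hh (copy_step j) (or_introl eq_refl) Hj) as [N|L]; [|lia].
    exfalso. apply N. exists (copy_pos j). apply copy_pos_at.
Qed.

(* A copy at an occurrence whose code exceeds every code of depth [<= K]
   lies deeper than [K]; so do all the pending copies of the same step. *)
Lemma copy_rstep_deep K c' j N : wle lt c' m -> lt (copy_step j) c' ->
  (forall d, lt (copy_step j) d -> lt d c' -> invisible K d) ->
  (forall o, r o <> None -> length o <= K -> pos_code o <= N) -> N < pos_code (copy_pos j) ->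
  agree K (st_tgt (copy_rstep j)) (contract l r (src c')) /\ K < st_depth (copy_rstep j).
Proof.
  intros Hc' Hj Hh HN Hcode. pose proof rseq_wo as W.
  destruct (succ_src _ (copy_step_lt j)) as [e1 [Hs [_ E1]]]. split.
  - rewrite copy_rstep_tgt. apply agree_trans with (contract l r (tgt (copy_step j))).
    + rewrite <- mixed_contract_all. apply psubst_agree; [apply rhs_wf|]. intros o x Hx Ho.
      assert (pos_code o <= N) by (apply HN; auto; congruence).
      destruct (pos_code o <=? pos_code (copy_pos j)) eqn:Eb; [intros p _; auto|].
      apply Nat.leb_nle in Eb. lia.
    + rewrite E1. apply contract_agree, args_agree_invisible_segment; auto;
        [eapply succ_wle; eauto|].
      intros d H1 H2. apply Hh; auto. apply (lt_wle_trans _ _ W _ e1); auto. apply Hs.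
  - unfold st_depth. simpl. rewrite length_app.
    assert (K < length (copy_pos j)); [|lia].
    apply Nat.nle_gt. intro L. assert (pos_code (copy_pos j) <= N); [|lia].
    apply HN; auto. pose proof (copy_pos_at j) as Oj. unfold copy_at in Oj. congruence.
Qed.

Lemma copies_eventually_near c' K : wle lt c' m ->
  (exists j, lt (copy_step j) c') ->
  (forall j, lt (copy_step j) c' -> exists j', lt (copy_step j') c' /\ copy_lt j j') ->
  exists a, lt (copy_step a) c' /\ forall j, lt (copy_step j) c' -> wle copy_lt a j ->
    agree K (st_tgt (copy_rstep j)) (contract l r (src c')) /\ K < st_depth (copy_rstep j).
Proof.
  intros Hc' [j0 Hj0] NoMax. pose proof rseq_wo as W.
  destruct (last_visible c' K Hc') as [Hnone|[e [He1 [He2 Hemax]]]].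
  { exists j0. split; auto. intros j Hj _. apply copy_rstep_near; auto. }
  assert (Later : forall d, lt e d -> lt d c' -> invisible K d).
  { intros d H1 H2. apply NNPP. intro N. exact (lt_not_wle _ _ W _ _ H1 (Hemax d H2 N)). }
  destruct (classic (exists j1, lt (copy_step j1) c' /\ lt e (copy_step j1))) as [[j1 [Hj1 He]]|Nj].
  { exists j1. split; auto. intros j Hj Hle. apply copy_rstep_near; auto.
    intros d Hd1 Hd2. apply Later; auto.
    eapply (lt_wle_trans _ _ W); [exact He|]. eapply wle_trans; eauto. apply copy_lt_wle; auto. }
  (* all copies before [c'] are copies of steps [<= e], so those of [e] are cofinal *)
  assert (Hall : forall j, lt (copy_step j) c' -> wle lt (copy_step j) e).
  { intros j Hj. apply (not_lt_wle _ _ W). intro L. apply Nj. eauto. }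
  assert (Hem : lt e m) by (eapply lt_wle_trans; eauto).
  destruct (pos_code_bounded_depth r K rhs_wf) as [N HN].
  destruct (no_max_unbounded (copy_at e) pos_code N) as [oa [Hoa HNa]].
  { apply NNPP. intro No. apply He2. left. auto. }
  { intros o Ho. destruct (NoMax (mk_copy e o Hem Ho) He1) as [j' [Hj' [L|[E L]]]].
    - exfalso. exact (lt_not_wle _ _ W _ _ L (Hall j' Hj')).
    - exists (copy_pos j'). split; auto. pose proof (copy_pos_at j') as Oj.
      rewrite <- E in Oj. exact Oj. }
  exists (mk_copy e oa Hem Hoa). split; [exact He1|]. intros j Hj Hle.
  assert (Ejc : copy_step j = e).
  { destruct (copy_lt_wle _ _ Hle) as [E|L]; auto.
    exfalso. exact (lt_not_wle _ _ W _ _ L (Hall j Hj)). }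
  apply (copy_rstep_deep K c' j N); auto.
  - rewrite Ejc. auto.
  - destruct Hle as [<-|[L|[E L]]]; [exact HNa| |unfold copy_pos at 1 in L; simpl in L; lia].
    exfalso. change (lt e (copy_step j)) in L. rewrite Ejc in L. exact (wo_irrefl W _ L).
Qed.

Lemma copies_strongly_conv c' : wle lt c' m ->
  (exists j, lt (copy_step j) c') ->
  (forall j, lt (copy_step j) c' -> exists j', lt (copy_step j') c' /\ copy_lt j j') ->
  strongly_conv copy_lt (fun j => lt (copy_step j) c') copy_rstep (contract l r (src c')).
Proof.
  intros Hc' Ne NoMax. split; intro K;
    destruct (copies_eventually_near c' K Hc' Ne NoMax) as [a [Ha Hall]];
    exists a; split; auto; intros j Hj Hle; apply Hall; auto.
Qed.

Lemma rseq_first_step : exists c0, (forall c, wle lt c0 c) /\ src c0 = rs_src q.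
Proof.
  pose proof rseq_wo as W.
  destruct (wo_min _ _ W (fun _ => True)) as [c0 [_ Hc0]]; [exists m; auto|].
  assert (Min0 : is_min lt c0) by (intros b Hb; apply (Hc0 b Hb I)).
  exists c0. split; [intro c; apply (not_lt_wle _ _ W), Min0|]. apply q_rseq, Min0.
Qed.

Lemma copy_rstep_first j : is_min copy_lt j -> st_src (copy_rstep j) = contract l r (rs_src q).
Proof.
  intros Hm. pose proof rseq_wo as W. simpl. destruct rseq_first_step as [c0 [Le0 <-]].
  rewrite (mixed_contract_ext _ _ (fun _ => false) (copy_step_lt j)), mixed_contract_none.
  - symmetry. apply contract_src_const; [apply Le0|right; apply copy_step_lt|].
    intros d _ Hd [o Ho].
    apply (Hm (mk_copy d o (wo_trans W _ _ _ Hd (copy_step_lt j)) Ho)). left. auto.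
  - intros o Ho. apply Nat.ltb_nlt. intro L.
    apply (Hm (mk_copy (copy_step j) o (copy_step_lt j) Ho)). right. split; auto.
Qed.

Lemma copy_rstep_succ j j' : is_succ copy_lt j j' -> st_src (copy_rstep j') = st_tgt (copy_rstep j).
Proof.
  intros [Hjj' Hnone]. pose proof rseq_wo as W. rewrite copy_rstep_tgt. simpl.
  assert (Gap : forall c o (Hc : lt c m) (Ho : copy_at c o),
             ~ (copy_lt j (mk_copy c o Hc Ho) /\ copy_lt (mk_copy c o Hc Ho) j'))
    by (intros; apply Hnone).
  destruct Hjj' as [L|[E L]].
  - (* the last copy of one step, followed by the first copy of a later one *)
    rewrite (mixed_contract_ext (copy_step j') _ (fun _ => false) (copy_step_lt j')),
      (mixed_contract_ext (copy_step j) _ (fun _ => true) (copy_step_lt j)),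
      mixed_contract_none, mixed_contract_all.
    + symmetry. apply contract_tgt_src_const; auto; [right; apply copy_step_lt|].
      intros d Hd1 Hd2 [o Ho].
      apply (Gap d o (wo_trans W _ _ _ Hd2 (copy_step_lt j')) Ho). split; left; auto.
    + intros o Ho. apply Nat.leb_le, Nat.nlt_ge. intro Lo.
      apply (Gap _ o (copy_step_lt j) Ho). split; [right; split; auto|left; auto].
    + intros o Ho. apply Nat.ltb_nlt. intro Lo.
      apply (Gap _ o (copy_step_lt j') Ho). split; [left; auto|right; split; auto].
  - rewrite <- E. apply mixed_contract_ext; [apply copy_step_lt|]. intros o Ho.
    destruct (pos_code o <=? pos_code (copy_pos j)) eqn:E1.
    + apply Nat.leb_le in E1. apply Nat.ltb_lt. lia.
    + apply Nat.leb_nle in E1. apply Nat.ltb_nlt. intro L2.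
      apply (Gap _ o (copy_step_lt j) Ho).
      split; right; rewrite ?copy_step_mk, ?copy_pos_mk; split; auto; lia.
Qed.

Lemma copy_rstep_limit j' : is_limit copy_lt j' ->
  strongly_conv copy_lt (fun j => copy_lt j j') copy_rstep (st_src (copy_rstep j')).
Proof.
  intros [[j0 Hj0] Hnp]. pose proof rseq_wo as W.
  (* [j'] is the first copy of its step: a copy of it with smaller code would
     give [j'] a predecessor *)
  assert (First : forall o, copy_at (copy_step j') o -> ~ pos_code o < pos_code (copy_pos j')).
  { intros o Ho Lo.
    destruct (bounded_max (fun n => exists o, copy_at (copy_step j') o /\ pos_code o = n /\
                                          n < pos_code (copy_pos j')) (pos_code (copy_pos j')))
      as [n [[o1 [Ho1 [En Ln]]] Hmax]].
    { exists (pos_code o). split; [exists o; split; [|split]; auto|lia]. }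
    apply Hnp. exists (mk_copy (copy_step j') o1 (copy_step_lt j') Ho1). split.
    - right. rewrite copy_step_mk, copy_pos_mk. split; [reflexivity|lia].
    - intros k [[L1|[E1 L1]] [L2|[E2 L2]]]; rewrite ?copy_step_mk, ?copy_pos_mk in *.
      + apply (wo_irrefl W (copy_step j')). eapply wo_trans; eauto.
      + rewrite E2 in L1. apply (wo_irrefl W _ L1).
      + rewrite <- E1 in L2. apply (wo_irrefl W _ L2).
      + assert (pos_code (copy_pos k) <= n); [|lia].
        apply Hmax; [|lia]. exists (copy_pos k). split; [|split; auto; lia].
        rewrite <- E2. apply copy_pos_at. }
  assert (Dom : forall j, lt (copy_step j) (copy_step j') <-> copy_lt j j').
  { intro j. split; [left; auto|]. intros [L|[E L]]; auto.
    exfalso. apply (First (copy_pos j)); auto. rewrite <- E. apply copy_pos_at. }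
  apply (strongly_conv_dom_ext _ (fun j => lt (copy_step j) (copy_step j'))); auto.
  simpl. rewrite (mixed_contract_ext _ _ (fun _ => false) (copy_step_lt j')), mixed_contract_none.
  2: { intros o Ho. apply Nat.ltb_nlt. apply First; auto. }
  apply copies_strongly_conv; [right; apply copy_step_lt|exists j0; apply Dom; auto|].
  intros j Hj. apply NNPP. intro N. apply Hnp. exists j. split; [apply Dom; auto|].
  intros k [H1 H2]. apply N. exists k. split; auto. apply Dom; auto.
Qed.

Definition copy_rseq : rseq S :=
  {| rs_src := contract l r (rs_src q); rs_idx := copy_idx; rs_lt := copy_lt;
     rs_step := copy_rstep |}.

Lemma copy_rseq_is_rseq : is_rseq T copy_rseq.
Proof.
  split; [|split; [exact copy_lt_wo|split; [exact copy_rstep_valid|split; [|split]]]]; simpl.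
  - destruct rseq_first_step as [c0 [Le0 <-]]. apply contract_src_wf, Le0.
  - exact copy_rstep_first.
  - exact copy_rstep_succ.
  - exact copy_rstep_limit.
Qed.

Lemma copy_rseq_conv_target : conv_target copy_rseq (contract l r (src m)).
Proof.
  pose proof rseq_wo as W.
  destruct (classic (inhabited copy_idx)) as [[j0]|NI].
  2: { left. split; auto. simpl. destruct rseq_first_step as [c0 [Le0 <-]]. symmetry.
       apply contract_src_const; [apply Le0|left; auto|].
       intros d _ Hd [o Ho]. apply NI. constructor. exact (mk_copy d o Hd Ho). }
  destruct (classic (exists jm, forall j, wle copy_lt j jm)) as [[jm Hjm]|NM].
  - right. left. exists jm. split; [intro a; destruct (Hjm a); auto|]. simpl.
    rewrite copy_rstep_tgt, (mixed_contract_ext _ _ (fun _ => true) (copy_step_lt jm)),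
      mixed_contract_all.
    + symmetry. apply contract_tgt_src_const; [apply copy_step_lt|left; auto|].
      intros d Hd1 Hd2 [o Ho].
      apply (lt_not_wle _ _ W _ _ Hd1), (copy_lt_wle (mk_copy d o Hd2 Ho) jm), Hjm.
    + intros o Ho. apply Nat.leb_le.
      destruct (Hjm (mk_copy _ o (copy_step_lt jm) Ho)) as [<-|[L|[E L]]]; auto.
      * exfalso. exact (wo_irrefl W _ L).
      * rewrite copy_pos_mk in L. lia.
  - assert (NoMax : forall j, exists j', copy_lt j j').
    { intro j. apply NNPP. intro N. apply NM. exists j. intro k.
      apply (not_lt_wle _ _ copy_lt_wo). intro L. apply N. eauto. }
    right. right. split; [constructor; exact j0|]. split; auto. split.
    { apply contract_src_wf. left; auto. }
    apply (strongly_conv_dom_ext _ (fun j => lt (copy_step j) m));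
      [intro j; split; auto; intros _; apply copy_step_lt|].
    apply copies_strongly_conv; [left; auto|exists j0; apply copy_step_lt|].
    intros j _. destruct (NoMax j) as [j' Hj']. exists j'. split; auto. apply copy_step_lt.
Qed.

Lemma conv_red_contract : conv_red T (contract l r (rs_src q)) (contract l r (src m)).
Proof.
  exists copy_rseq. split; [|split]; auto.
  - apply copy_rseq_is_rseq.
  - apply copy_rseq_conv_target.
Qed.

End Lifting.

(** * Root steps *)

Section RootStep.
Variables (S : signature) (T : TRS S) (rho : rule S) (q : rseq S).
Hypotheses (non_overlap : non_overlapping T) (rho_rule : rules T rho)
  (lhs_linear : linear (lhs rho)) (q_rseq : is_rseq T q)
  (src_pattern : has_pattern (lhs rho) (rs_src q)).

Local Notation l := (lhs rho).
Local Notation r := (rhs rho).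
Local Notation lt := (rs_lt q).
Local Notation src c := (st_src (rs_step q c)).
Local Notation tgt c := (st_tgt (rs_step q c)).

Local Notation lhs_wf := (rule_lhs_wf _ T rho rho_rule).

(* By orthogonality a step inside a term with pattern [l] is either the root
   step or misses the function positions of [l]. *)
Lemma pattern_step_tgt c : has_pattern l (src c) -> st_pos (rs_step q c) <> [] ->
  has_pattern l (tgt c).
Proof.
  intros I Hp. apply has_pattern_step; [apply lhs_wf|auto|]. intros f Hf.
  destruct (step_in_pattern_overlap T rho (rs_step q c) f non_overlap rho_rule lhs_wf lhs_linear)
    as [E _]; auto; apply q_rseq.
Qed.

Lemma pattern_until_root c : (forall d, lt d c -> st_pos (rs_step q d) <> []) ->
  has_pattern l (src c).
Proof.
  destruct q_rseq as [_ [W [_ [M [Su Li]]]]]. destruct (rule_lhs_depth_bound _ T rho rho_rule) as [nl Hnl].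
  induction c as [c IH] using (well_founded_induction (wo_wf W)). intros Hd.
  destruct (wo_cases lt c) as [Hm|[[d Hsd]|Hl]].
  - rewrite M; auto.
  - rewrite (Su _ _ Hsd). apply pattern_step_tgt; [|apply Hd, Hsd].
    apply IH; [apply Hsd|]. intros e He. apply Hd. eapply wo_trans; eauto. apply Hsd.
  - destruct (proj1 (Li c Hl) nl) as [e [He Hc]].
    assert (Ie : has_pattern l (tgt e)).
    { apply pattern_step_tgt; auto. apply IH; auto. intros d Hd'. apply Hd. eapply wo_trans; eauto. }
    intros p f Hp. rewrite <- (Hc e He (or_introl eq_refl) p); [apply Ie; auto|].
    apply Hnl. congruence.
Qed.

Lemma normal_form_no_pattern u : normal_form T u -> wf u -> ~ has_pattern l u.
Proof.
  intros Hnf Hu Iu. apply Hnf. exists [], rho, (matching_subst l u).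
  refine (conj rho_rule (conj (matching_subst_wf _ _ lhs_wf Hu Iu) _)).
  apply (has_pattern_subst l u lhs_wf lhs_linear Hu Iu).
Qed.

Lemma exists_root_step u : normal_form T u -> wf u -> conv_target q u ->
  exists c, st_pos (rs_step q c) = [].
Proof.
  intros Hnf Hu C. apply NNPP. intro NEx. apply (normal_form_no_pattern u Hnf Hu).
  destruct (rule_lhs_depth_bound _ T rho rho_rule) as [nl Hnl].
  assert (IT : forall c, has_pattern l (tgt c)).
  { intro c. apply pattern_step_tgt; [apply pattern_until_root; intros d _ E|intro E];
      apply NEx; eauto. }
  destruct C as [[_ ->]|[[mm [_ ->]]|[_ [_ [_ [Cv _]]]]]]; auto.
  destruct (Cv nl) as [e [_ He]]. intros p f Hp.
  rewrite <- (He e I (or_introl eq_refl) p); [apply IT; auto|].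
  apply Hnl. congruence.
Qed.

Lemma step_below_var c : has_pattern l (src c) -> st_pos (rs_step q c) <> [] ->
  below_var l (st_pos (rs_step q c)).
Proof.
  intros Ic Hp. destruct (proj1 (proj2 (proj2 q_rseq)) c) as [Wc [Rc [Sc Ec]]].
  destruct (var_above_dec l (st_pos (rs_step q c))) as [[o [w [x [E Hx]]]]|Hn].
  { exists x, w. rewrite (var_pos_unique l x o lhs_linear Hx). auto. }
  exfalso. destruct (l (st_pos (rs_step q c))) as [[f|y]|] eqn:E.
  - destruct (step_in_pattern_overlap T rho (rs_step q c) f non_overlap rho_rule lhs_wf lhs_linear)
      as [E' _]; auto; apply q_rseq.
  - apply (Hn _ [] (eq_sym (app_nil_r _)) y E).
  - (* the redex has a function symbol at its root, but [l] has no position there *)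
    assert (Hroot : subterm (src c) (st_pos (rs_step q c)) [] <> None).
    { rewrite Ec. unfold subst. simpl. destruct (rules_ok T _ Rc) as [_ [_ [_ [[g Hg] _]]]].
      rewrite Hg. discriminate. }
    apply Hroot. unfold subterm. rewrite app_nil_r.
    rewrite (has_pattern_subst l _ lhs_wf lhs_linear Wc Ic), subst_psubst, psubst_no_var; auto.
Qed.

Lemma root_step_contract c : has_pattern l (src c) -> st_pos (rs_step q c) = [] ->
  tgt c = contract l r (src c).
Proof.
  intros Ic Hp. destruct (rules_ok T rho rho_rule) as [Wl [Wr [_ [[f0 Hf0] Hv]]]].
  assert (Rho : st_rule (rs_step q c) = rho).
  { destruct (step_in_pattern_overlap T rho (rs_step q c) f0 non_overlap rho_rule Wl lhs_linear)
      as [_ E]; auto; [apply q_rseq|rewrite Hp; auto]. }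
  destruct (proj1 (proj2 (proj2 q_rseq)) c) as [_ [_ [_ Ec]]].
  rewrite Hp, Rho in Ec. change (src c = subst l (st_sub (rs_step q c))) in Ec.
  unfold st_tgt. rewrite Hp, replace_nil, Rho, Ec. apply subst_rhs_contract; auto.
Qed.

End RootStep.

Lemma root_step_conv_red {S} (T : TRS S) a u : orthogonal T -> wf u -> normal_form T u ->
  valid_step T a -> st_pos a = [] -> conv_red T (st_src a) u -> conv_red T (st_tgt a) u.
Proof.
  intros [Hll Ho] Hu Hnf [Wt [Hr [Ws Eq]]] Pa [q [R [Eq0 C]]].
  set (rho := st_rule a) in *.
  destruct (rules_ok T rho Hr) as [Wl [Wr [_ [_ Hv]]]].
  assert (Ll : linear (lhs rho)) by (intros p1 p2 x; apply (Hll rho Hr p1 p2 x)).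
  rewrite Pa in Eq. change (st_src a = subst (lhs rho) (st_sub a)) in Eq.
  assert (It : has_pattern (lhs rho) (rs_src q)) by (rewrite Eq0, Eq; apply subst_has_pattern; auto).
  assert (Ea : st_tgt a = contract (lhs rho) (rhs rho) (rs_src q)).
  { unfold st_tgt. rewrite Pa, replace_nil, Eq0, Eq. apply subst_rhs_contract; auto. }
  destruct (wo_min _ _ (proj1 (proj2 R)) _ (exists_root_step _ T rho q Ho Hr Ll R It u Hnf Hu C))
    as [m [Pm Hm]].
  assert (Im : forall c, wle (rs_lt q) c m -> has_pattern (lhs rho) (st_src (rs_step q c))).
  { intros c Hc. apply (pattern_until_root _ T rho q Ho Hr Ll R It). intros d Hd E.
    apply (Hm d); auto. eapply lt_wle_trans; eauto; apply R. }
  rewrite Ea. apply conv_red_trans with (st_tgt (rs_step q m)).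
  - rewrite (root_step_contract _ T rho q Ho Hr Ll R m (Im m (or_introl eq_refl)) Pm).
    apply (conv_red_contract _ T rho q m Hr R Im).
    intros c Hc. apply (step_below_var _ T rho q Ho Hr Ll R); [apply Im; right; auto|].
    intro E. exact (Hm c Hc E).
  - apply conv_red_after; auto.
Qed.

Theorem mainTheorem13 (S : signature) (T : TRS S) (t s u : term S) :
  orthogonal T -> wf t -> wf s -> wf u ->
  (exists q : rseq S, is_rseq T q /\ rs_src q = t /\ conv_target q u) ->
  normal_form T u ->
  (exists q : rseq S, is_rseq T q /\ rs_src q = t /\ finite_rseq q /\
     (forall a, st_depth (rs_step q a) = 0) /\ conv_target q s) ->
  exists q : rseq S, is_rseq T q /\ rs_src q = s /\ conv_target q u.
Proof.
  intros Ho _ _ Hu Htu Hnf [q [[_ [W [V [M [Su L]]]]] [<- [[l Hl] [D0 C]]]]].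
  assert (Root : forall a, st_pos (rs_step q a) = []).
  { intro a. apply length_zero_iff_nil, D0. }
  assert (All : forall c, conv_red T (st_src (rs_step q c)) u).
  { intro c. induction c as [c IH] using (well_founded_induction (wo_wf W)).
    destruct (wo_cases (rs_lt q) c) as [Hm|[[d Hd]|Hl']].
    - rewrite M; auto.
    - rewrite (Su _ _ Hd). apply root_step_conv_red; auto. apply IH, Hd.
    - exfalso. exact (finite_no_limit _ _ W l Hl c Hl'). }
  destruct (classic (inhabited (rs_idx q))) as [[i]|NI].
  - destruct (finite_has_max _ _ W l Hl i) as [y Hy].
    rewrite (conv_target_last q s y W C Hy). apply root_step_conv_red; auto.
  - rewrite (conv_target_empty q s C NI). exact Htu.
Qed.
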